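(* Let $\lambda>0$ with $\lambda^{-2}$ an integer and $\delta>0$. For all sufficiently large $N$ (depending on $\lambda$) the following holds. Let $f,g:[N]\to[-1,1]$ and suppose $|\widehat f(\frac aq+\beta)|\le\delta|\beta|N^2$ for all integers $1\le a,q\le\lambda^{-2}$ and all $\beta\in\mathbb{R}$. Then $$\Big|\sum_{n\ge1}(f*g)(n)1_S(n)\Big|\le 10(\delta\lambda^{-8}+\lambda)N^{3/2}.$$
   Context: $e(\theta):=e^{2\pi i\theta}$; for $f:[N]\to\mathbb{C}$, $\widehat f(\theta):=\sum_{n\le N}f(n)e(-n\theta)$. For finitely supported $f,g:\mathbb{Z}\to\mathbb{C}$ (functions on $[N]$ extended by $0$), $(f*g)(x):=\sum_{n\in\mathbb{Z}}f(n)g(x-n)$. $S:=\{m^2:m\in\mathbb{N}\}$. *)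

From Stdlib Require Import Reals Lra Lia ZArith List.
From Coquelicot Require Import Coquelicot.
Open Scope R_scope.

Definition sumR (lo hi : nat) (F : nat -> R) : R :=
  fold_right (fun n acc => F n + acc) 0 (seq lo (S hi - lo)).

Definition sumC (lo hi : nat) (F : nat -> C) : C :=
  fold_right (fun n acc => Cplus (F n) acc) (RtoC 0) (seq lo (S hi - lo)).

(* e(theta) = exp(2 pi i theta) = cos(2 pi theta) + i sin(2 pi theta) *)
Definition e (theta : R) : C := (cos (2 * PI * theta), sin (2 * PI * theta)).

(* Fourier transform of f : [N] -> R, [N] = {1,...,N} *)
Definition fhat (N : nat) (f : nat -> R) (theta : R) : C :=
  sumC 1 N (fun n => Cmult (RtoC (f n)) (e (- (INR n) * theta))).

Definition ext (N : nat) (f : nat -> R) (z : Z) : R :=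
  if ((1 <=? z)%Z && (z <=? Z.of_nat N)%Z)%bool then f (Z.to_nat z) else 0.

(* (f * g)(x) = sum_{n in Z} f(n) g(x - n); only n in [N] contribute *)
Definition conv (N : nat) (f g : nat -> R) (x : Z) : R :=
  sumR 1 N (fun n => ext N f (Z.of_nat n) * ext N g (x - Z.of_nat n)%Z).

(* indicator of S = { m^2 : m in N } *)
Definition ind_S (n : nat) : R :=
  if Nat.eqb (Nat.sqrt n * Nat.sqrt n) n then 1 else 0.

(* Write [T] for the sum to be bounded and [U(th) = sum_(s <= sqrt(2N)) e(s^2 th)].
   Orthogonality on [Z/2NZ] gives [2N T = sum_(j < 2N) Re (fhat f fhat g U)(j/2N)].
   By Dirichlet, [j/2N = a/q + be] with [q <= Q = 4 sqrt(2N) + 2k] and [|be| < 1/(qQ)].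
   If [q > k], Weyl differencing gives [|U| <= 9 sqrt(N/k) = 9 lambda sqrt N]; if
   [q <= k] and [|be| >= k/4N], the Kusmin-Landau estimate along residue classes mod
   [q] gives the same bound.  For those [j], [|fhat f fhat g U| <= |U| (|fhat f|^2 +
   |fhat g|^2)/2], and Parseval turns their sum into [9 lambda N^(3/2)].  For the
   remaining [j] the hypothesis gives [|fhat f| <= delta k N/4], and at most
   [k (k+1)^2] pairs [(j, a/q)] of this kind occur; this produces the
   [delta lambda^(-8) N^(3/2)] term. *)

From Stdlib Require Import Reals ZArith Lra Lia List Permutation Bool Classical.
From Coquelicot Require Import Coquelicot.
Open Scope nat_scope.

(** * Dirichlet's approximation theorem *)

Lemma pigeonhole Q : forall f : nat -> nat, (forall i, i <= Q -> f i < Q) ->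
  exists i i', i < i' <= Q /\ f i = f i'.
Proof.
  induction Q; intros f Hf.
  - specialize (Hf 0 (le_n 0)). lia.
  - set (v := f (S Q)).
    destruct (classic (exists i, i <= Q /\ f i = v)) as [[i [Hi Hv]]|Hn].
    + exists i, (S Q). split; [lia|]. auto.
    + assert (Hv: v < S Q) by (apply Hf; lia).
      set (f' := fun i => if f i <? v then f i else f i - 1).
      destruct (IHQ f') as [i [i' [Hii Heq]]].
      * intros i Hi. unfold f'. assert (f i <> v) by (intro; apply Hn; exists i; auto).
        assert (f i < S Q) by (apply Hf; lia).
        destruct (f i <? v) eqn:E; [apply Nat.ltb_lt in E| apply Nat.ltb_ge in E]; lia.
      * exists i, i'. split; [lia|].
        assert (f i <> v) by (intro; apply Hn; exists i; split; auto; lia).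
        assert (f i' <> v) by (intro; apply Hn; exists i'; split; auto; lia).
        unfold f' in Heq.
        destruct (f i <? v) eqn:E; [apply Nat.ltb_lt in E| apply Nat.ltb_ge in E];
        destruct (f i' <? v) eqn:E'; [apply Nat.ltb_lt in E'| apply Nat.ltb_ge in E'| apply Nat.ltb_lt in E'| apply Nat.ltb_ge in E']; lia.
Qed.

Lemma dirichlet_approx P j Q : 0 < P -> 0 < Q ->
  exists q a, 1 <= q <= Q /\ (Z.abs (Z.of_nat (q * j) - Z.of_nat (P * a)) * Z.of_nat Q < Z.of_nat P)%Z.
Proof.
  intros HP HQ.
  destruct (pigeonhole Q (fun i => (Q * ((i * j) mod P)) / P)) as [i [i' [Hii Heq]]].
  { intros i _. apply Nat.Div0.div_lt_upper_bound. pose proof (Nat.mod_upper_bound (i * j) P ltac:(lia)). nia. }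
  set (r := (i * j) mod P) in Heq. set (r' := (i' * j) mod P) in Heq.
  assert (Hclose: (Z.abs (Z.of_nat r' - Z.of_nat r) * Z.of_nat Q < Z.of_nat P)%Z).
  { pose proof (Nat.div_mod (Q * r) P ltac:(lia)). pose proof (Nat.div_mod (Q * r') P ltac:(lia)).
    pose proof (Nat.mod_upper_bound (Q * r) P ltac:(lia)). pose proof (Nat.mod_upper_bound (Q * r') P ltac:(lia)).
    rewrite <- (Z.abs_eq (Z.of_nat Q)) by lia. rewrite <- Z.abs_mul. nia. }
  exists (i' - i), ((i' * j) / P - (i * j) / P). split; [lia|].
  pose proof (Nat.div_mod (i * j) P ltac:(lia)). pose proof (Nat.div_mod (i' * j) P ltac:(lia)).
  assert ((i * j) / P <= (i' * j) / P) by (apply Nat.Div0.div_le_mono; nia).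
  replace (Z.of_nat ((i' - i) * j) - Z.of_nat (P * ((i' * j) / P - (i * j) / P)))%Z
    with (Z.of_nat r' - Z.of_nat r)%Z by nia.
  exact Hclose.
Qed.

Lemma dirichlet_approx_coprime P j Q : 0 < P -> 0 < Q ->
  exists q a, 1 <= q <= Q /\ Nat.gcd a q = 1 /\
  (Z.abs (Z.of_nat (q * j) - Z.of_nat (P * a)) * Z.of_nat Q < Z.of_nat P)%Z.
Proof.
  intros HP HQ. destruct (dirichlet_approx P j Q HP HQ) as [q [a [Hq Ha]]].
  set (g := Nat.gcd a q).
  assert (Hg: g <> 0) by (intro Hg; apply Nat.gcd_eq_0 in Hg; lia).
  destruct (Nat.gcd_divide_l a q) as [a' Ea]. destruct (Nat.gcd_divide_r a q) as [q' Eq].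
  fold g in Ea, Eq.
  exists q', a'.
  assert (Hg1: Nat.gcd a' q' = 1).
  { pose proof (Nat.gcd_div_gcd a q g Hg eq_refl) as Hdiv.
    rewrite Ea, Eq, !Nat.div_mul in Hdiv by auto. exact Hdiv. }
  split; [|split; auto].
  - split; [destruct q'; lia|]. rewrite Eq in Hq. nia.
  - rewrite Ea, Eq in Ha.
    replace (Z.of_nat (q' * g * j) - Z.of_nat (P * (a' * g)))%Z with
      (Z.of_nat g * (Z.of_nat (q' * j) - Z.of_nat (P * a')))%Z in Ha by (rewrite !Nat2Z.inj_mul; ring).
    rewrite Z.abs_mul, (Z.abs_eq (Z.of_nat g)) in Ha by lia.
    assert (0 <= Z.abs (Z.of_nat (q' * j) - Z.of_nat (P * a')) * Z.of_nat Q)%Z by (apply Z.mul_nonneg_nonneg; lia).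
    nia.
Qed.

Open Scope R_scope.

Definition rsum (a n : nat) (F : nat -> R) : R :=
  fold_right (fun i acc => F i + acc) 0 (seq a n).

Lemma sumR_rsum lo hi F : sumR lo hi F = rsum lo (S hi - lo) F.
Proof. reflexivity. Qed.

Lemma rsum_0 a F : rsum a 0 F = 0. Proof. reflexivity. Qed.

Lemma rsum_S a n F : rsum a (S n) F = F a + rsum (S a) n F. Proof. reflexivity. Qed.

Lemma rsum_Sr a n F : rsum a (S n) F = rsum a n F + F (a + n)%nat.
Proof.
  revert a; induction n; intros a.
  - rewrite !rsum_S, !rsum_0, Nat.add_0_r. ring.
  - rewrite rsum_S, IHn, rsum_S. replace (S a + n)%nat with (a + S n)%nat by lia. ring.
Qed.

Lemma rsum_ext a n F G : (forall i, (a <= i < a + n)%nat -> F i = G i) -> rsum a n F = rsum a n G.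
Proof.
  revert a; induction n; intros a H; [reflexivity|].
  rewrite !rsum_S. rewrite H by lia. rewrite (IHn (S a)); [reflexivity|]. intros; apply H; lia.
Qed.

Lemma rsum_le a n F G : (forall i, (a <= i < a + n)%nat -> F i <= G i) -> rsum a n F <= rsum a n G.
Proof.
  revert a; induction n; intros a H; [rewrite !rsum_0; lra|].
  rewrite !rsum_S. apply Rplus_le_compat; [apply H; lia| apply IHn; intros; apply H; lia].
Qed.

Lemma rsum_plus a n F G : rsum a n (fun i => F i + G i) = rsum a n F + rsum a n G.
Proof. revert a; induction n; intros a; [rewrite !rsum_0; ring| rewrite !rsum_S, IHn; ring]. Qed.

Lemma rsum_scal a n c F : rsum a n (fun i => c * F i) = c * rsum a n F.
Proof. revert a; induction n; intros a; [rewrite !rsum_0; ring| rewrite !rsum_S, IHn; ring]. Qed.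

Lemma rsum_scal_r a n c F : rsum a n (fun i => F i * c) = rsum a n F * c.
Proof. revert a; induction n; intros a; [rewrite !rsum_0; ring| rewrite !rsum_S, IHn; ring]. Qed.

Lemma rsum_opp a n F : rsum a n (fun i => - F i) = - rsum a n F.
Proof. revert a; induction n; intros a; [rewrite !rsum_0; ring| rewrite !rsum_S, IHn; ring]. Qed.

Lemma rsum_const a n c : rsum a n (fun _ => c) = INR n * c.
Proof. revert a; induction n; intros a; [rewrite rsum_0; simpl; ring|]. rewrite rsum_S, IHn, S_INR. ring. Qed.

Lemma rsum_zero a n : rsum a n (fun _ => 0) = 0.
Proof. rewrite rsum_const; ring. Qed.

Lemma rsum_abs a n F : Rabs (rsum a n F) <= rsum a n (fun i => Rabs (F i)).
Proof.
  revert a; induction n; intros a.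
  - rewrite !rsum_0, Rabs_R0; lra.
  - rewrite !rsum_S. eapply Rle_trans; [apply Rabs_triang|]. specialize (IHn (S a)). lra.
Qed.

Lemma rsum_nonneg a n F : (forall i, (a <= i < a + n)%nat -> 0 <= F i) -> 0 <= rsum a n F.
Proof. intros H. rewrite <- (rsum_zero a n). apply rsum_le; auto. Qed.

Lemma rsum_split a n m F : rsum a (n + m) F = rsum a n F + rsum (a + n) m F.
Proof.
  revert a; induction n; intros a.
  - rewrite Nat.add_0_l, Nat.add_0_r, rsum_0; ring.
  - rewrite Nat.add_succ_l, !rsum_S, IHn. replace (S a + n)%nat with (a + S n)%nat by lia. ring.
Qed.

Lemma rsum_ge_term a n F i : (forall x, (a <= x < a + n)%nat -> 0 <= F x) -> (a <= i < a + n)%nat -> F i <= rsum a n F.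
Proof.
  revert a; induction n; intros a HF Hi; [lia|].
  rewrite rsum_S. destruct (Nat.eq_dec i a).
  - subst. assert (0 <= rsum (S a) n F) by (apply rsum_nonneg; intros; apply HF; lia). lra.
  - assert (F i <= rsum (S a) n F) by (apply IHn; [intros; apply HF|]; lia).
    assert (0 <= F a) by (apply HF; lia). lra.
Qed.

Lemma rsum_le_longer a n m (G : nat -> R) : (forall x, 0 <= G x) -> (n <= m)%nat -> rsum a n G <= rsum a m G.
Proof.
  intros HG Hnm. replace m with (n + (m - n))%nat by lia. rewrite rsum_split.
  assert (0 <= rsum (a + n) (m - n) G) by (apply rsum_nonneg; auto). lra.
Qed.

Lemma rsum_shift a d n F : rsum (a + d) n F = rsum a n (fun i => F (i + d)%nat).
Proof.
  revert a; induction n; intros a; [reflexivity|].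
  rewrite !rsum_S. replace (S (a + d)) with (S a + d)%nat by lia. rewrite IHn. reflexivity.
Qed.

Lemma rsum_swap a n b m (F : nat -> nat -> R) :
  rsum a n (fun i => rsum b m (fun j => F i j)) = rsum b m (fun j => rsum a n (fun i => F i j)).
Proof.
  revert a; induction n; intros a.
  - rewrite rsum_0. symmetry. apply rsum_zero.
  - rewrite rsum_S, IHn. rewrite <- rsum_plus. apply rsum_ext; intros; rewrite rsum_S; reflexivity.
Qed.

Lemma rsum_mult a n b m F G :
  rsum a n F * rsum b m G = rsum a n (fun i => rsum b m (fun j => F i * G j)).
Proof.
  rewrite <- rsum_scal_r. apply rsum_ext. intros. rewrite rsum_scal. reflexivity.
Qed.

Lemma rsum_sqr a n F : rsum a n F ^ 2 = rsum a n (fun s => rsum a n (fun t => F s * F t)).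
Proof. simpl. rewrite Rmult_1_r. apply rsum_mult. Qed.

Lemma rsum_delta a n i0 F :
  rsum a n (fun i => if Nat.eqb i i0 then F i else 0) =
  if (Nat.leb a i0 && Nat.ltb i0 (a + n))%bool then F i0 else 0.
Proof.
  revert a; induction n; intros a.
  - rewrite rsum_0. destruct (Nat.leb a i0 && Nat.ltb i0 (a+0))%bool eqn:E; [|reflexivity].
    apply andb_true_iff in E as [E1 E2]. apply Nat.leb_le in E1; apply Nat.ltb_lt in E2; lia.
  - rewrite rsum_S, IHn. destruct (Nat.eqb a i0) eqn:E.
    + apply Nat.eqb_eq in E; subst.
      replace (Nat.leb (S i0) i0) with false by (symmetry; apply Nat.leb_gt; lia).
      replace (Nat.leb i0 i0 && Nat.ltb i0 (i0 + S n))%bool with true.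
      * simpl; ring.
      * symmetry; apply andb_true_iff; split; [apply Nat.leb_le|apply Nat.ltb_lt]; lia.
    + apply Nat.eqb_neq in E.
      replace (Nat.leb (S a) i0 && Nat.ltb i0 (S a + n))%bool with (Nat.leb a i0 && Nat.ltb i0 (a + S n))%bool.
      * ring.
      * destruct (Nat.leb (S a) i0) eqn:E1, (Nat.leb a i0) eqn:E2, (Nat.ltb i0 (S a + n)) eqn:E3, (Nat.ltb i0 (a + S n)) eqn:E4; simpl; auto;
        rewrite ?Nat.leb_le, ?Nat.leb_gt, ?Nat.ltb_lt, ?Nat.ltb_ge in *; lia.
Qed.

Lemma rsum_blocks q nb F : rsum 0 (q * nb) F = rsum 0 nb (fun b => rsum 0 q (fun y => F (b * q + y)%nat)).
Proof.
  induction nb.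
  - rewrite Nat.mul_0_r; reflexivity.
  - replace (q * S nb)%nat with (q * nb + q)%nat by lia. rewrite rsum_split, IHnb, rsum_Sr.
    f_equal.
    rewrite (rsum_shift 0 (q*nb) q). apply rsum_ext; intros. f_equal; lia.
Qed.

Lemma rsum_even_le M (G : nat -> R) : (forall x, 0 <= G x) ->
  rsum 1 M (fun h => G (2 * h)%nat) <= rsum 0 (2 * M + 1) G.
Proof.
  intros HG. induction M.
  - rewrite rsum_0. simpl. rewrite rsum_S, rsum_0. specialize (HG 0%nat). lra.
  - rewrite rsum_Sr. replace (2 * S M + 1)%nat with (S (S (2 * M + 1))) by lia.
    rewrite !rsum_Sr. replace (1 + M)%nat with (S M) by lia.
    replace (0 + (2 * M + 1))%nat with (2 * M + 1)%nat by lia.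
    replace (0 + S (2 * M + 1))%nat with (2 * S M)%nat by lia.
    specialize (HG (2 * M + 1)%nat). lra.
Qed.

Lemma rsum_truncate M K (F : nat -> R) : (K <= M)%nat ->
  rsum 1 M (fun t => if (t <=? K)%nat then F t else 0) = rsum 1 K F.
Proof.
  intros HK.
  assert (EM: rsum 1 M (fun t => if (t <=? K)%nat then F t else 0) = rsum 1 (K + (M - K)) (fun t => if (t <=? K)%nat then F t else 0)) by (f_equal; lia).
  rewrite EM, rsum_split. clear EM.
  rewrite (rsum_ext (1 + K) (M - K) _ (fun _ => 0)).
  2:{ intros t Ht. destruct (t <=? K)%nat eqn:E; [apply Nat.leb_le in E; lia| reflexivity]. }
  rewrite rsum_zero, Rplus_0_r. apply rsum_ext. intros t Ht.
  replace (t <=? K)%nat with true by (symmetry; apply Nat.leb_le; lia). reflexivity.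
Qed.

Lemma rsum_head_bound (M s0 : nat) (F : nat -> R) : (1 <= s0)%nat -> (forall s, Rabs (F s) <= 1) ->
  Rabs (rsum 1 M (fun s => if (s0 <=? s)%nat then 0 else F s)) <= INR s0 - 1.
Proof.
  intros Hs0 HF. destruct s0 as [|s0]; [lia|].
  eapply Rle_trans; [apply rsum_abs|].
  eapply Rle_trans; [apply rsum_le with (G := fun s => if (s <=? s0)%nat then 1 else 0)|].
  - intros s _. destruct (S s0 <=? s)%nat eqn:E1, (s <=? s0)%nat eqn:E2;
    rewrite ?Nat.leb_le, ?Nat.leb_gt in *; try lia; rewrite ?Rabs_R0; auto; lra.
  - rewrite S_INR. replace (INR s0 + 1 - 1) with (INR s0) by ring.
    destruct (le_lt_dec s0 M).
    + rewrite rsum_truncate by lia. rewrite rsum_const. lra.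
    + rewrite (rsum_ext 1 M _ (fun _ => 1)).
      * rewrite rsum_const. rewrite Rmult_1_r. apply le_INR; lia.
      * intros s Hs. replace (s <=? s0)%nat with true by (symmetry; apply Nat.leb_le; lia). reflexivity.
Qed.

Lemma rsum_square_symmetric M (c : nat -> nat -> R) : (forall s t, c s t = c t s) ->
  rsum 1 M (fun s => rsum 1 M (fun t => c s t)) =
  rsum 1 M (fun s => c s s) + 2 * rsum 1 M (fun s => rsum 1 M (fun t => if t <? s then c s t else 0)).
Proof.
  intros Hs.
  rewrite (rsum_ext 1 M _ (fun s => rsum 1 M (fun t => (if t <? s then c s t else 0) + (if s <? t then c s t else 0)
      + (if Nat.eqb t s then c s t else 0)))).
  2:{ intros s _. apply rsum_ext. intros t _.
      destruct (t <? s) eqn:E1, (s <? t) eqn:E2, (Nat.eqb t s) eqn:E3;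
      rewrite ?Nat.ltb_lt, ?Nat.ltb_ge, ?Nat.eqb_eq, ?Nat.eqb_neq in *; try lia; try ring. }
  rewrite (rsum_ext 1 M _ (fun s => rsum 1 M (fun t => (if t <? s then c s t else 0) + (if s <? t then c s t else 0))
      + c s s)).
  2:{ intros s Hs'. rewrite rsum_plus. rewrite rsum_delta.
      replace (Nat.leb 1 s && Nat.ltb s (1 + M))%bool with true; [reflexivity|].
      symmetry; apply andb_true_iff; split; [apply Nat.leb_le|apply Nat.ltb_lt]; lia. }
  rewrite rsum_plus. rewrite (rsum_ext 1 M (fun s => rsum 1 M (fun t => (if t <? s then c s t else 0) + (if s <? t then c s t else 0)))
     (fun s => rsum 1 M (fun t => (if t <? s then c s t else 0)) + rsum 1 M (fun t => if s <? t then c s t else 0))).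
  2:{ intros; apply rsum_plus. }
  rewrite rsum_plus.
  rewrite (rsum_swap 1 M 1 M (fun s t => if s <? t then c s t else 0)).
  rewrite (rsum_ext 1 M (fun j => rsum 1 M (fun i => if i <? j then c i j else 0))
            (fun s => rsum 1 M (fun t => if t <? s then c s t else 0))).
  2:{ intros; apply rsum_ext; intros. rewrite Hs. reflexivity. }
  ring.
Qed.

Lemma rsum_above_shift M t (F : nat -> R) : (1 <= t <= M)%nat ->
  rsum 1 M (fun s => if t <? s then F s else 0) =
  rsum 1 M (fun h => if (t + h <=? M)%nat then F (t + h)%nat else 0).
Proof.
  intros Ht.
  assert (EM: rsum 1 M (fun s => if t <? s then F s else 0) = rsum 1 (t + (M - t)) (fun s => if t <? s then F s else 0)) by (f_equal; lia).
  rewrite EM, rsum_split. clear EM.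
  rewrite (rsum_ext 1 t _ (fun _ => 0)).
  2:{ intros s Hs. destruct (t <? s) eqn:E; [apply Nat.ltb_lt in E; lia| reflexivity]. }
  rewrite rsum_zero, Rplus_0_l.
  assert (EM: rsum 1 M (fun h => if (t + h <=? M)%nat then F (t + h)%nat else 0) = rsum 1 ((M - t) + t) (fun h => if (t + h <=? M)%nat then F (t + h)%nat else 0)) by (f_equal; lia).
  rewrite EM, rsum_split. clear EM.
  rewrite (rsum_ext (1 + (M - t)) t _ (fun _ => 0)).
  2:{ intros h Hh. destruct (t + h <=? M)%nat eqn:E; [apply Nat.leb_le in E; lia| reflexivity]. }
  rewrite rsum_zero, Rplus_0_r.
  rewrite (rsum_shift 1 t). apply rsum_ext. intros h Hh.
  replace (t <? h + t) with true by (symmetry; apply Nat.ltb_lt; lia).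
  replace (t + h <=? M)%nat with true by (symmetry; apply Nat.leb_le; lia).
  f_equal; lia.
Qed.

Lemma rsum_lower_triangle_shift M (F : nat -> nat -> R) :
  rsum 1 M (fun s => rsum 1 M (fun t => if t <? s then F s t else 0)) =
  rsum 1 M (fun h => rsum 1 M (fun t => if (t + h <=? M)%nat then F (t + h)%nat t else 0)).
Proof.
  rewrite rsum_swap. rewrite (rsum_swap 1 M 1 M (fun h t => if (t + h <=? M)%nat then F (t + h)%nat t else 0)).
  apply rsum_ext. intros t Ht. apply (rsum_above_shift M t (fun s => F s t)). lia.
Qed.

Definition lsum (l : list nat) (F : nat -> R) := fold_right (fun i acc => F i + acc) 0 l.

Lemma lsum_perm l l' F : Permutation l l' -> lsum l F = lsum l' F.
Proof.
  induction 1; simpl; try lra.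
Qed.

Lemma lsum_map l h F : lsum (map h l) F = lsum l (fun i => F (h i)).
Proof. induction l; simpl; auto. fold (lsum (map h l) F). rewrite IHl; reflexivity. Qed.

Lemma rsum_reindex a q (h : nat -> nat) F :
  (forall y, (a <= y < a + q)%nat -> (h y < q)%nat) ->
  (forall y1 y2, (a <= y1 < a + q)%nat -> (a <= y2 < a + q)%nat -> h y1 = h y2 -> y1 = y2) ->
  rsum a q (fun y => F (h y)) = rsum 0 q F.
Proof.
  intros Hr Hi. unfold rsum. fold (lsum (seq a q) (fun y => F (h y))). fold (lsum (seq 0 q) F).
  rewrite <- lsum_map. apply lsum_perm.
  apply NoDup_Permutation_bis.
  - apply FinFun.Injective_map_NoDup_in; [|apply seq_NoDup].
    intros x y Hx Hy. apply in_seq in Hx, Hy. apply Hi; lia.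
  - rewrite length_map, !length_seq. lia.
  - intros x Hx. apply in_map_iff in Hx as [y [<- Hy]]. apply in_seq in Hy. apply in_seq. specialize (Hr y). lia.
Qed.

Lemma rsum_indicator_interval n (P : nat -> bool) G :
  (forall u v w, P u = true -> P w = true -> (u <= v <= w)%nat -> P v = true) ->
  exists A len, rsum 0 n (fun u => if P u then G u else 0) = rsum A len G /\
    (forall v, (A <= v < A + len)%nat -> P v = true) /\ (A + len <= n)%nat.
Proof.
  intros Hc.
  assert (Hgen: exists A len, rsum 0 n (fun u => if P u then G u else 0) = rsum A len G /\
    (forall v, (v < n)%nat -> (P v = true <-> (A <= v < A + len)%nat)) /\ (A + len <= n)%nat).
  { induction n.
    - exists 0%nat, 0%nat. split; [reflexivity|]. split; [intros; lia| lia].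
    - destruct IHn as [A [len [E [Hiff Hle]]]].
      rewrite rsum_Sr, E. simpl.
      destruct (P n) eqn:Pn.
      + destruct len.
        * exists n, 1%nat. split; [rewrite rsum_S, !rsum_0; ring|]. split; [|lia].
          intros v Hv. destruct (Nat.eq_dec v n); [subst; split; auto; lia|].
          split; intros Hp; [apply Hiff in Hp; lia| lia].
        * assert (A + S len = n)%nat as Heq.
          { destruct (Nat.eq_dec (A + S len) n); auto.
            assert (Hnext: P (A + S len)%nat = true).
            { apply (Hc (A + len)%nat _ n); auto; [apply Hiff; lia| lia]. }
            apply Hiff in Hnext; lia. }
          exists A, (S (S len)). split; [rewrite (rsum_Sr A (S len)); rewrite Heq; ring|].
          split; [|lia]. intros v Hv. destruct (Nat.eq_dec v n); [subst; split; auto; lia|].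
          rewrite Hiff by lia. lia.
      + exists A, len. split; [ring|]. split; [|lia]. intros v Hv.
        destruct (Nat.eq_dec v n); [subst; split; [congruence|]|apply Hiff; lia].
        intros Hv2. assert (A + len <= n)%nat by lia. lia. }
  destruct Hgen as [A [len [E [Hiff Hle]]]]. exists A, len. split; auto. split; auto.
  intros v Hv. apply Hiff; lia.
Qed.

Lemma rsum_telescope a n (g : nat -> R) : rsum a n (fun t => g (S t) - g t) = g (a + n)%nat - g a.
Proof.
  revert a; induction n; intros a.
  - rewrite rsum_0, Nat.add_0_r; ring.
  - rewrite rsum_S, IHn. replace (S a + n)%nat with (a + S n)%nat by lia. ring.
Qed.

Lemma rsum_near_count n (c r : R) : 0 <= r ->
  rsum 0 n (fun j => if Rlt_dec (Rabs (INR j - c)) r then 1 else 0) <= 2 * r + 1.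
Proof.
  intros Hr. set (lo := c - r). set (hi := c + r).
  assert (Hinv: rsum 0 n (fun j => if Rlt_dec (Rabs (INR j - c)) r then 1 else 0) <= Rmax 0 (Rmin (INR n - 1) hi - lo + 1)).
  { induction n.
    - rewrite rsum_0. apply Rmax_l.
    - rewrite rsum_Sr. simpl (0 + n)%nat. rewrite S_INR.
      destruct (Rlt_dec (Rabs (INR n - c)) r) as [Hin|Hin].
      + apply Rabs_def2 in Hin. unfold lo, hi in *.
        assert (E0: Rmin (INR n - 1) (c + r) = INR n - 1) by (apply Rmin_left; lra).
        assert (E1: Rmin (INR n + 1 - 1) (c + r) = INR n + 1 - 1) by (apply Rmin_left; lra).
        rewrite E0 in IHn. rewrite E1.
        rewrite Rmax_right in IHn by lra. rewrite Rmax_right by lra. lra.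
      + rewrite Rplus_0_r. eapply Rle_trans; [exact IHn|]. apply Rle_max_compat_l.
        apply Rplus_le_compat_r, Rplus_le_compat_r. apply Rle_min_compat_r. lra. }
  eapply Rle_trans; [exact Hinv|]. apply Rmax_lub; [lra|]. unfold lo, hi.
  pose proof (Rmin_r (INR n - 1) (c + r)). lra.
Qed.

Lemma harmonic_le_sqrt n : rsum 1 n (fun i => / INR i) <= 2 * sqrt (INR n).
Proof.
  induction n.
  - rewrite rsum_0. simpl. rewrite sqrt_0. lra.
  - rewrite rsum_Sr. replace (1 + n)%nat with (S n) by lia.
    rewrite S_INR. set (a := sqrt (INR n)). set (b := sqrt (INR n + 1)).
    assert (Ha: 0 <= a) by apply sqrt_pos. assert (Hb: 0 <= b) by apply sqrt_pos.
    assert (Ea: a * a = INR n) by (apply sqrt_sqrt, pos_INR).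
    assert (Eb: b * b = INR n + 1) by (apply sqrt_sqrt; pose proof (pos_INR n); lra).
    assert (Hb1: 1 <= b) by (pose proof (pos_INR n); nra).
    assert (a <= b) by nra.
    assert (/ (INR n + 1) <= 2 * (b - a)).
    { rewrite <- Eb. assert ((b - a) * (b + a) = 1) by nra.
      apply Rmult_le_reg_r with (b * b); [nra|]. rewrite Rinv_l by nra. nra. }
    change (sqrt (INR n)) with a in IHn. lra.
Qed.

Lemma rsum_sqr_le N (f : nat -> R) : (forall n, (1 <= n <= N)%nat -> -1 <= f n <= 1) ->
  rsum 1 N (fun m => f m * f m) <= INR N.
Proof.
  intros Hf. eapply Rle_trans; [apply rsum_le with (G := fun _ => 1)|].
  - intros m Hm. specialize (Hf m ltac:(lia)). nra.
  - rewrite rsum_const. lra.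
Qed.

Definition csum (a n : nat) (F : nat -> C) : C :=
  fold_right (fun i acc => Cplus (F i) acc) (RtoC 0) (seq a n).

Lemma sumC_csum lo hi F : sumC lo hi F = csum lo (S hi - lo) F.
Proof. reflexivity. Qed.

Lemma csum_S a n F : csum a (S n) F = Cplus (F a) (csum (S a) n F). Proof. reflexivity. Qed.

Lemma csum_ext a n F G : (forall i, (a <= i < a + n)%nat -> F i = G i) -> csum a n F = csum a n G.
Proof.
  revert a; induction n; intros a H; [reflexivity|].
  rewrite !csum_S. rewrite H by lia. rewrite (IHn (S a)); [reflexivity|]. intros; apply H; lia.
Qed.

Lemma fst_csum a n F : fst (csum a n F) = rsum a n (fun i => fst (F i)).
Proof. revert a; induction n; intros a; [reflexivity|]. rewrite csum_S, rsum_S. simpl. rewrite IHn. reflexivity. Qed.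

Lemma snd_csum a n F : snd (csum a n F) = rsum a n (fun i => snd (F i)).
Proof. revert a; induction n; intros a; [reflexivity|]. rewrite csum_S, rsum_S. simpl. rewrite IHn. reflexivity. Qed.

Lemma csum_mult_l a n F z : Cmult z (csum a n F) = csum a n (fun i => Cmult z (F i)).
Proof.
  revert a; induction n; intros a.
  - unfold csum; simpl. unfold Cmult, RtoC; simpl. f_equal; ring.
  - rewrite !csum_S, <- IHn. destruct (F a), (csum (S a) n F), z. unfold Cmult, Cplus; simpl. f_equal; ring.
Qed.

Lemma csum_mult_r a n F z : Cmult (csum a n F) z = csum a n (fun i => Cmult (F i) z).
Proof.
  revert a; induction n; intros a.
  - unfold csum; simpl. unfold Cmult, RtoC; simpl. f_equal; ring.
  - rewrite !csum_S, <- IHn. destruct (F a), (csum (S a) n F), z. unfold Cmult, Cplus; simpl. f_equal; ring.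
Qed.

Lemma Cmod_le_Rabs_fst_snd z : Cmod z <= Rabs (fst z) + Rabs (snd z).
Proof.
  destruct z as [x y]. simpl.
  replace (x, y) with (Cplus (RtoC x) (Cmult Ci (RtoC y)))
    by (unfold Cplus, Cmult, RtoC, Ci; simpl; f_equal; ring).
  eapply Rle_trans; [apply Cmod_triangle|]. rewrite Cmod_mult, Cmod_Ci, !Cmod_R. lra.
Qed.

Lemma Cmod_sqr z : Cmod z ^ 2 = fst z ^ 2 + snd z ^ 2.
Proof. unfold Cmod. rewrite pow2_sqrt; [reflexivity|]. apply Rplus_le_le_0_compat; apply pow2_ge_0. Qed.

Lemma Cmod_csum_le a n F : Cmod (csum a n F) <= rsum a n (fun i => Cmod (F i)).
Proof.
  revert a; induction n; intros a.
  - unfold csum; simpl. rewrite rsum_0, Cmod_0. lra.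
  - rewrite csum_S, rsum_S. eapply Rle_trans; [apply Cmod_triangle|]. specialize (IHn (S a)). lra.
Qed.

Lemma Cmod_e x : Cmod (e x) = 1.
Proof.
  unfold Cmod, e; simpl. pose proof (sin2_cos2 (2 * PI * x)) as Hpyth. unfold Rsqr in Hpyth.
  match goal with |- sqrt ?z = 1 => replace z with 1 by nra end. apply sqrt_1.
Qed.

Lemma e_sub_nat x (n : nat) : e (x - INR n) = e x.
Proof.
  unfold e. rewrite <- (cos_period (2 * PI * (x - INR n)) n), <- (sin_period (2 * PI * (x - INR n)) n).
  replace (2 * PI * (x - INR n) + 2 * INR n * PI) with (2 * PI * x) by ring. reflexivity.
Qed.

(** * Trigonometric sums and the distance to the nearest integer *)

Lemma PI_gt_3 : 3 < PI. Proof. pose proof PI2_3_2. lra. Qed.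

Lemma sin_ge_third x : 0 <= x -> x <= PI/2 -> x/3 <= sin x.
Proof.
  intros Hx0 Hx1. assert (Hx2 : x <= 2) by (pose proof PI_4; lra).
  destruct (pre_sin_bound x 1 Hx0) as [Hlb _]; [lra|].
  unfold sin_approx, sin_term in Hlb. simpl in Hlb.
  match type of Hlb with ?a <= _ => assert (E: a = x - x^3/6 + x^5/120 - x^7/5040) by field end.
  rewrite E in Hlb.
  assert (0 <= x^2) by nra. assert (x^2 <= 4) by nra.
  assert (0 <= x^5*(42 - x^2)) by (apply Rmult_le_pos; [apply pow_le; lra| nra]).
  assert (0 <= x * (4 - x^2)) by (apply Rmult_le_pos; lra).
  nra.
Qed.

Lemma sin_period_Z x (n : Z) : sin (x + 2 * IZR n * PI) = sin x.
Proof.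
  destruct (Z_le_gt_dec 0 n).
  - rewrite <- (Z2Nat.id n) by lia. rewrite <- INR_IZR_INZ. apply sin_period.
  - replace n with (- Z.of_nat (Z.to_nat (- n)))%Z by lia.
    rewrite opp_IZR, <- INR_IZR_INZ.
    rewrite <- (sin_period (x + 2 * - INR (Z.to_nat (- n)) * PI) (Z.to_nat (-n))). f_equal. ring.
Qed.

Lemma cos_period_Z x (n : Z) : cos (x + 2 * IZR n * PI) = cos x.
Proof.
  destruct (Z_le_gt_dec 0 n).
  - rewrite <- (Z2Nat.id n) by lia. rewrite <- INR_IZR_INZ. apply cos_period.
  - replace n with (- Z.of_nat (Z.to_nat (- n)))%Z by lia.
    rewrite opp_IZR, <- INR_IZR_INZ.
    rewrite <- (cos_period (x + 2 * - INR (Z.to_nat (- n)) * PI) (Z.to_nat (-n))). f_equal. ring.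
Qed.

Lemma Rabs_sin_add_nat_PI x (n : nat) : Rabs (sin (x + INR n * PI)) = Rabs (sin x).
Proof.
  induction n.
  - simpl. rewrite Rmult_0_l, Rplus_0_r. reflexivity.
  - rewrite S_INR. replace (x + (INR n + 1) * PI) with ((x + INR n * PI) + PI) by ring.
    rewrite neg_sin, Rabs_Ropp. auto.
Qed.

Lemma Rabs_sin_add_Z_PI x (n : Z) : Rabs (sin (x + IZR n * PI)) = Rabs (sin x).
Proof.
  destruct (Z_le_gt_dec 0 n).
  - rewrite <- (Z2Nat.id n) by lia. rewrite <- INR_IZR_INZ. apply Rabs_sin_add_nat_PI.
  - replace n with (- Z.of_nat (Z.to_nat (- n)))%Z by lia.
    rewrite opp_IZR, <- INR_IZR_INZ.
    rewrite <- (Rabs_sin_add_nat_PI (x + - INR (Z.to_nat (- n)) * PI) (Z.to_nat (-n))). f_equal. f_equal. ring.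
Qed.

Lemma rsum_cos_arith_bound a K al ph : sin (al/2) <> 0 ->
  Rabs (rsum a K (fun t => cos (al * INR t + ph))) <= / Rabs (sin (al/2)).
Proof.
  intros Hs.
  set (g := fun t : nat => sin (al * INR t + ph - al/2)).
  assert (E: rsum a K (fun t => cos (al * INR t + ph)) =
             / (2 * sin (al/2)) * rsum a K (fun t => g (S t) - g t)).
  { rewrite <- rsum_scal. apply rsum_ext. intros i _. unfold g. cbv beta. rewrite S_INR.
    replace (al * (INR i + 1) + ph - al / 2) with ((al * INR i + ph) + al/2) by lra.
    replace (al * INR i + ph - al / 2) with ((al * INR i + ph) - al/2) by ring.
    rewrite sin_plus, sin_minus. field. auto. }
  rewrite E, rsum_telescope, Rabs_mult, Rabs_inv, Rabs_mult.
  rewrite (Rabs_right 2) by lra.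
  assert (0 < Rabs (sin (al/2))) by (apply Rabs_pos_lt; auto).
  assert (Rabs (g (a + K)%nat - g a) <= 2).
  { unfold g. pose proof (SIN_bound (al * INR (a + K) + ph - al / 2)).
    pose proof (SIN_bound (al * INR a + ph - al / 2)). apply Rabs_le; lra. }
  apply Rle_trans with (/ (2 * Rabs (sin (al / 2))) * 2).
  - apply Rmult_le_compat_l; auto. left; apply Rinv_0_lt_compat; lra.
  - right; field; lra.
Qed.

Lemma rsum_cos_orthogonality (P : nat) (d : Z) : (0 < P)%nat -> (Z.abs d < Z.of_nat P)%Z ->
  rsum 0 P (fun j => cos (2 * PI * IZR d * INR j / INR P)) = if Z.eqb d 0 then INR P else 0.
Proof.
  intros HP Hd. destruct (Z.eqb d 0) eqn:Ed.
  - apply Z.eqb_eq in Ed; subst. rewrite (rsum_ext _ _ _ (fun _ => 1)).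
    + rewrite rsum_const; ring.
    + intros. replace (2 * PI * IZR 0 * INR i / INR P) with 0 by (simpl; field; apply not_0_INR; lia). apply cos_0.
  - apply Z.eqb_neq in Ed.
    assert (HPr: 0 < INR P) by (apply lt_0_INR; lia).
    set (al := 2 * PI * IZR d / INR P).
    assert (Hs: sin (al/2) <> 0).
    { intros H0. apply sin_eq_0_0 in H0 as [m Hm]. pose proof PI_gt_3.
      assert (E: PI * (IZR d - IZR m * INR P) = 0).
      { replace (PI * (IZR d - IZR m * INR P)) with (INR P * (al / 2 - IZR m * PI)) by (unfold al; field; lra).
        rewrite Hm. ring. }
      apply Rmult_integral in E as [E|E]; [lra|].
      assert (Edm: d = (m * Z.of_nat P)%Z).
      { apply eq_IZR. rewrite mult_IZR, <- INR_IZR_INZ. lra. }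
      subst d. rewrite Z.abs_mul, (Z.abs_eq (Z.of_nat P)) in Hd by lia.
      destruct (Z.eq_dec m 0) as [->|Hm0]; [lia|]. nia. }
    set (g := fun t : nat => sin (al * INR t - al/2)).
    assert (E: rsum 0 P (fun j => cos (2 * PI * IZR d * INR j / INR P)) =
             / (2 * sin (al/2)) * rsum 0 P (fun t => g (S t) - g t)).
    { rewrite <- rsum_scal. apply rsum_ext. intros i _. unfold g. cbv beta. rewrite S_INR.
      replace (al * (INR i + 1) - al / 2) with ((al * INR i) + al/2) by lra.
      replace (al * INR i - al / 2) with ((al * INR i) - al/2) by ring.
      rewrite sin_plus, sin_minus. unfold al. replace (2 * PI * IZR d * INR i / INR P) with (2 * PI * IZR d / INR P * INR i) by (field; lra). field. auto. }
    rewrite E, rsum_telescope. unfold g. simpl INR at 2. rewrite Nat.add_0_l.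
    replace (al * INR P - al / 2) with (- (al/2) + 2 * IZR d * PI) by (unfold al; field; lra).
    rewrite sin_period_Z. replace (al * 0 - al / 2) with (- (al/2)) by ring. ring.
Qed.

Definition dist_Z (y : R) : R := Rmin (frac_part y) (1 - frac_part y).

Lemma frac_part_bounds y : 0 <= frac_part y < 1.
Proof. destruct (base_fp y). lra. Qed.

Lemma dist_Z_le y (n : Z) : dist_Z y <= Rabs (y - IZR n).
Proof.
  unfold dist_Z. pose proof (frac_part_bounds y). unfold frac_part in *.
  destruct (Z_le_gt_dec n (Int_part y)).
  - apply Rle_trans with (y - IZR (Int_part y)); [apply Rmin_l|].
    assert (IZR n <= IZR (Int_part y)) by (apply IZR_le; lia).
    rewrite Rabs_right; lra.
  - apply Rle_trans with (1 - (y - IZR (Int_part y))); [apply Rmin_r|].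
    assert (IZR (Int_part y) + 1 <= IZR n) by (rewrite <- plus_IZR; apply IZR_le; lia).
    rewrite Rabs_left1; lra.
Qed.

Lemma dist_Z_attained y : exists n : Z, dist_Z y = Rabs (y - IZR n).
Proof.
  unfold dist_Z. pose proof (frac_part_bounds y). unfold frac_part in *.
  destruct (Rle_dec (y - IZR (Int_part y)) (1 - (y - IZR (Int_part y)))).
  - exists (Int_part y). rewrite Rmin_left by lra. rewrite Rabs_right; lra.
  - exists (Int_part y + 1)%Z. rewrite Rmin_right by lra. rewrite plus_IZR, Rabs_left1; lra.
Qed.

Lemma dist_Z_lipschitz x y : dist_Z y - Rabs (x - y) <= dist_Z x.
Proof.
  destruct (dist_Z_attained x) as [n Hn]. pose proof (dist_Z_le y n) as Hy.
  rewrite Hn. pose proof (Rabs_triang (y - x) (x - IZR n)) as Htri.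
  replace (y - x + (x - IZR n)) with (y - IZR n) in Htri by ring.
  rewrite (Rabs_minus_sym y x) in Htri. lra.
Qed.

Lemma dist_Z_le_sin y : dist_Z y <= Rabs (sin (PI * y)).
Proof.
  pose proof (frac_part_bounds y) as Hf. set (f := frac_part y) in *.
  replace (PI * y) with (PI * f + IZR (Int_part y) * PI)
    by (unfold f, frac_part; ring).
  rewrite Rabs_sin_add_Z_PI. pose proof PI_gt_3. pose proof PI_4.
  unfold dist_Z. fold f.
  destruct (Rle_dec f (1/2)).
  - apply Rle_trans with f; [apply Rmin_l|].
    pose proof (sin_ge_third (PI * f)) as Hs. rewrite Rabs_right.
    + assert (f <= PI * f / 3) by nra. apply Rle_trans with (PI * f / 3); auto. apply Hs; nra.
    + apply Rle_ge. apply sin_ge_0; nra.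
  - apply Rle_trans with (1 - f); [apply Rmin_r|].
    rewrite <- sin_PI_x. replace (PI - PI * f) with (PI * (1 - f)) by ring.
    pose proof (sin_ge_third (PI * (1 - f))) as Hs. rewrite Rabs_right.
    + assert (1 - f <= PI * (1 - f) / 3) by nra. apply Rle_trans with (PI * (1-f) / 3); auto. apply Hs; nra.
    + apply Rle_ge. apply sin_ge_0; nra.
Qed.

Lemma abel_bound_with_last (A n : nat) (w s : nat -> R) :
  (forall u, (A <= u <= A + n)%nat -> 0 <= w u) ->
  (forall u, (A <= u < A + n)%nat -> w (S u) <= w u) ->
  (forall u, Rabs (s u) <= 1) ->
  Rabs (rsum A (S n) (fun u => w u * (s (S u) - s u)) - w (A + n)%nat * s (S (A + n))) <= 2 * w A - w (A + n)%nat.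
Proof.
  intros Hw Hm Hs. induction n.
  - rewrite rsum_S, rsum_0, Nat.add_0_r.
    replace (w A * (s (S A) - s A) + 0 - w A * s (S A)) with (- (w A * s A)) by ring.
    rewrite Rabs_Ropp, Rabs_mult. rewrite (Rabs_right (w A)) by (apply Rle_ge, Hw; lia).
    specialize (Hs A). assert (0 <= w A) by (apply Hw; lia). nra.
  - rewrite rsum_Sr.
    assert (IH: Rabs (rsum A (S n) (fun u => w u * (s (S u) - s u)) - w (A + n)%nat * s (S (A + n))) <=
      2 * w A - w (A + n)%nat) by (apply IHn; intros; [apply Hw|apply Hm]; lia).
    replace (A + S n)%nat with (S (A + n)) by lia.
    replace (rsum A (S n) (fun u => w u * (s (S u) - s u)) + w (S (A + n)) * (s (S (S (A + n))) - s (S (A + n))) -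
      w (S (A + n)) * s (S (S (A + n)))) with
      ((rsum A (S n) (fun u => w u * (s (S u) - s u)) - w (A + n)%nat * s (S (A + n))) +
       (w (A + n)%nat - w (S (A + n))) * s (S (A + n))) by ring.
    eapply Rle_trans; [apply Rabs_triang|].
    assert (Hd: 0 <= w (A+n)%nat - w (S (A + n))) by (assert (w (S (A+n)) <= w (A+n)%nat) by (apply Hm; lia); lra).
    rewrite Rabs_mult, (Rabs_right (w (A + n)%nat - w (S (A + n)))) by lra.
    specialize (Hs (S (A+n))). nra.
Qed.

Lemma abel_bound (A n : nat) (w s : nat -> R) :
  (forall u, (A <= u <= A + n)%nat -> 0 <= w u) ->
  (forall u, (A <= u < A + n)%nat -> w (S u) <= w u) ->
  (forall u, Rabs (s u) <= 1) ->
  Rabs (rsum A (S n) (fun u => w u * (s (S u) - s u))) <= 2 * w A.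
Proof.
  intros Hw Hm Hs. pose proof (abel_bound_with_last A n w s Hw Hm Hs) as Hlast.
  set (S0 := rsum A (S n) (fun u => w u * (s (S u) - s u))) in *.
  set (last := w (A + n)%nat * s (S (A + n))) in *.
  assert (Hw0: 0 <= w (A + n)%nat) by (apply Hw; lia).
  assert (Hend: Rabs last <= w (A + n)%nat).
  { unfold last. rewrite Rabs_mult, Rabs_right by lra. pose proof (Hs (S (A + n))). nra. }
  pose proof (Rabs_triang (S0 - last) last) as Htri. replace (S0 - last + last) with S0 in Htri by ring.
  lra.
Qed.

Definition half_cot (d : R) := cos d / (2 * sin d).

Lemma half_cot_antitone d d' : 0 < d -> d <= d' -> d' <= PI/2 -> half_cot d' <= half_cot d.
Proof.
  intros Hd Hdd' Hd'. pose proof PI_gt_3. unfold half_cot.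
  assert (0 < sin d) by (apply sin_gt_0; lra). assert (0 < sin d') by (apply sin_gt_0; lra).
  assert (Hdiff: 0 <= sin (d' - d)) by (apply sin_ge_0; lra).
  rewrite sin_minus in Hdiff.
  apply Rmult_le_reg_r with (2 * sin d * sin d'); [nra|].
  field_simplify; try lra.
Qed.

Lemma cos_half_cot_decomposition th d : sin d <> 0 ->
  cos th = (cos th - cos (th + 2 * d)) / 2 + half_cot d * (sin (th + 2 * d) - sin th).
Proof.
  intros Hs. unfold half_cot.
  rewrite cos_plus, sin_plus. replace (2 * d) with (d + d) by ring.
  rewrite cos_plus, sin_plus. pose proof (sin2_cos2 d) as Hpyth. unfold Rsqr in Hpyth.
  apply Rminus_diag_uniq_sym.
  transitivity ((sin d * sin d + cos d * cos d - 1) * (cos th / 2 + sin th * cos d / (2 * sin d))).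
  - field. auto.
  - rewrite Hpyth. ring.
Qed.

Lemma two_half_cot_le d dl : 0 < dl -> PI * dl <= d <= PI / 2 -> 2 * half_cot d <= / dl.
Proof.
  intros Hdl Hd. pose proof PI_gt_3. unfold half_cot.
  pose proof (sin_ge_third d ltac:(nra) ltac:(lra)).
  pose proof (COS_bound d).
  assert (0 < d) by nra.
  apply Rle_trans with (1 / sin d).
  - apply Rmult_le_reg_r with (sin d); [lra|]. field_simplify; lra.
  - apply Rle_trans with (1 / (d / 3)).
    + apply Rmult_le_reg_r with (sin d * (d / 3)); [nra|]. field_simplify; lra.
    + apply Rmult_le_reg_r with (d * dl); [nra|]. field_simplify; nra.
Qed.

(* Kusmin-Landau: [cos th_u] splits into a telescoping part and an Abel sum of
   [sin th_u] against the decreasing weights [half_cot (d u)]. *)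
Lemma kusmin_landau (A len : nat) (th d : nat -> R) (dl : R) : 0 < dl ->
  (forall u, (A <= u < A + len)%nat -> th (S u) = th u + 2 * d u /\ PI * dl <= d u <= PI / 2) ->
  (forall u, (A <= u)%nat -> (S u < A + len)%nat -> d u <= d (S u)) ->
  Rabs (rsum A len (fun u => cos (th u))) <= 1 + / dl.
Proof.
  intros Hdl Hth Hmon. pose proof PI_gt_3.
  destruct len as [|n].
  - rewrite rsum_0, Rabs_R0. assert (0 < /dl) by (apply Rinv_0_lt_compat; auto). lra.
  - assert (Hsin: forall u, (A <= u < A + S n)%nat -> 0 < sin (d u)).
    { intros u Hu. destruct (Hth u Hu) as [_ Hd]. apply sin_gt_0; nra. }
    rewrite (rsum_ext _ _ _ (fun u => (cos (th u) - cos (th (S u))) / 2 + half_cot (d u) * (sin (th (S u)) - sin (th u)))).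
    2:{ intros u Hu. destruct (Hth u Hu) as [E _]. rewrite E. apply cos_half_cot_decomposition. specialize (Hsin u Hu). lra. }
    rewrite rsum_plus.
    assert (E1: rsum A (S n) (fun u => (cos (th u) - cos (th (S u))) / 2) = - / 2 * rsum A (S n) (fun u => cos (th (S u)) - cos (th u))).
    { rewrite <- rsum_scal. apply rsum_ext. intros; field. }
    rewrite E1, (rsum_telescope A (S n) (fun u => cos (th u))).
    assert (H1: Rabs (- / 2 * (cos (th (A + S n)%nat) - cos (th A))) <= 1).
    { pose proof (COS_bound (th (A + S n)%nat)). pose proof (COS_bound (th A)). apply Rabs_le. lra. }
    assert (H2: Rabs (rsum A (S n) (fun u => half_cot (d u) * (sin (th (S u)) - sin (th u)))) <= 2 * half_cot (d A)).
    { apply (abel_bound A n (fun u => half_cot (d u)) (fun u => sin (th u))).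
      - intros u Hu. destruct (Hth u ltac:(lia)) as [_ Hd]. unfold half_cot.
        apply Rmult_le_pos; [apply cos_ge_0; nra|]. left. apply Rinv_0_lt_compat.
        specialize (Hsin u ltac:(lia)). lra.
      - intros u Hu. destruct (Hth u ltac:(lia)) as [_ Hd]. destruct (Hth (S u) ltac:(lia)) as [_ Hd'].
        apply half_cot_antitone; try nra. apply Hmon; lia.
      - intros u. apply Rabs_le. apply SIN_bound. }
    assert (H3: 2 * half_cot (d A) <= / dl) by (apply two_half_cot_le; [exact Hdl| apply Hth; lia]).
    eapply Rle_trans; [apply Rabs_triang|]. lra.
Qed.

(** * Weyl sums over squares *)

Definition weyl_sum (M : nat) (th : R) : C := csum 1 M (fun s => e (INR (s * s) * th)).

Definition square_phase (th : R) (s : nat) := 2 * PI * (INR (s * s) * th).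

Lemma Cmod_weyl_sum_sqr M th : Cmod (weyl_sum M th) ^ 2 =
  rsum 1 M (fun s => rsum 1 M (fun t => cos (square_phase th s - square_phase th t))).
Proof.
  rewrite Cmod_sqr. unfold weyl_sum. rewrite fst_csum, snd_csum. rewrite !rsum_sqr. rewrite <- rsum_plus.
  apply rsum_ext; intros s _. rewrite <- rsum_plus. apply rsum_ext; intros t _.
  unfold e, square_phase; simpl. rewrite cos_minus. ring.
Qed.

Lemma Cmod_weyl_sum_le M th : Cmod (weyl_sum M th) <= INR M.
Proof.
  unfold weyl_sum. eapply Rle_trans; [apply Cmod_csum_le|].
  rewrite (rsum_ext 1 M _ (fun _ => 1)); [rewrite rsum_const; lra|]. intros; apply Cmod_e.
Qed.

Lemma Cmod_weyl_sum_opp M th : Cmod (weyl_sum M (- th)) = Cmod (weyl_sum M th).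
Proof.
  unfold Cmod, weyl_sum. rewrite !fst_csum, !snd_csum. unfold e; simpl fst; simpl snd.
  rewrite (rsum_ext 1 M (fun i => cos (2 * PI * (INR (i * i) * - th))) (fun i => cos (2 * PI * (INR (i * i) * th)))).
  2:{ intros. rewrite <- cos_neg. f_equal. ring. }
  rewrite (rsum_ext 1 M (fun i => sin (2 * PI * (INR (i * i) * - th))) (fun i => - sin (2 * PI * (INR (i * i) * th)))).
  2:{ intros. rewrite <- sin_neg. f_equal. ring. }
  rewrite rsum_opp. f_equal. ring.
Qed.

Definition weyl_weight (M : nat) (th : R) (x : nat) : R :=
  if Rle_dec (dist_Z (INR x * th)) 0 then INR M else Rmin (INR M) (/ dist_Z (INR x * th)).

Lemma weyl_weight_ge_0 M th x : 0 <= weyl_weight M th x.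
Proof.
  unfold weyl_weight. destruct (Rle_dec _ 0); [apply pos_INR|].
  apply Rmin_glb; [apply pos_INR|]. left; apply Rinv_0_lt_compat. lra.
Qed.

Lemma weyl_weight_le M th x : weyl_weight M th x <= INR M.
Proof. unfold weyl_weight. destruct (Rle_dec _ 0); [lra| apply Rmin_l]. Qed.

Lemma weyl_difference_bound M th h : (1 <= h)%nat ->
  Rabs (rsum 1 M (fun t => if (t + h <=? M)%nat then cos (square_phase th (t + h) - square_phase th t) else 0)) <= weyl_weight M th (2 * h).
Proof.
  intros Hh.
  rewrite (rsum_ext 1 M _ (fun t => if (t <=? M - h)%nat then cos ((4 * PI * INR h * th) * INR t + 2 * PI * INR (h * h) * th) else 0)).
  2:{ intros t Ht. destruct (t + h <=? M)%nat eqn:E1, (t <=? M - h)%nat eqn:E2;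
      rewrite ?Nat.leb_le, ?Nat.leb_gt in *; try lia; try reflexivity.
      f_equal. unfold square_phase. rewrite !mult_INR, plus_INR. ring. }
  destruct (le_lt_dec h M).
  - rewrite rsum_truncate by lia.
    assert (Htriv: Rabs (rsum 1 (M - h) (fun t => cos (4 * PI * INR h * th * INR t + 2 * PI * INR (h * h) * th))) <= INR M).
    { eapply Rle_trans; [apply rsum_abs|]. eapply Rle_trans; [apply rsum_le with (G := fun _ => 1); intros; apply Rabs_le; apply COS_bound|].
      rewrite rsum_const, Rmult_1_r. apply le_INR; lia. }
    unfold weyl_weight. destruct (Rle_dec (dist_Z (INR (2 * h) * th)) 0) as [Hn|Hn]; auto.
    apply Rmin_glb; auto.
    pose proof (dist_Z_le_sin (INR (2 * h) * th)) as Hs.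
    assert (E: 4 * PI * INR h * th / 2 = PI * (INR (2 * h) * th)) by (rewrite mult_INR; simpl; field).
    assert (Hsn: sin (4 * PI * INR h * th / 2) <> 0).
    { rewrite E. intro H0. rewrite H0, Rabs_R0 in Hs. lra. }
    eapply Rle_trans; [apply rsum_cos_arith_bound; auto|]. rewrite E.
    apply Rinv_le_contravar; lra.
  - rewrite (rsum_ext 1 M _ (fun _ => 0)).
    + rewrite rsum_zero, Rabs_R0. apply weyl_weight_ge_0.
    + intros t Ht. destruct (t <=? M - h)%nat eqn:E; [apply Nat.leb_le in E; lia| reflexivity].
Qed.

Lemma weyl_differencing M th : Cmod (weyl_sum M th) ^ 2 <= INR M + 2 * rsum 1 M (fun h => weyl_weight M th (2 * h)).
Proof.
  rewrite Cmod_weyl_sum_sqr. rewrite rsum_square_symmetric.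
  2:{ intros. unfold square_phase. rewrite <- cos_neg. f_equal. ring. }
  rewrite (rsum_ext 1 M (fun s => cos (square_phase th s - square_phase th s)) (fun _ => 1)).
  2:{ intros. rewrite Rminus_diag. apply cos_0. }
  rewrite rsum_const, Rmult_1_r. apply Rplus_le_compat_l. apply Rmult_le_compat_l; [lra|].
  rewrite (rsum_lower_triangle_shift M (fun s t => cos (square_phase th s - square_phase th t))).
  eapply Rle_trans; [apply Rle_abs|]. eapply Rle_trans; [apply rsum_abs|].
  apply rsum_le. intros h Hh. apply weyl_difference_bound. lia.
Qed.

Definition recip_profile (M : R) (K : R) (i : nat) : R := if (i <=? 1)%nat then M else K / INR (i - 1).

Lemma recip_profile_ge_0 M K i : 0 <= M -> 0 <= K -> 0 <= recip_profile M K i.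
Proof.
  intros. unfold recip_profile. destruct (i <=? 1)%nat; auto.
  destruct (Nat.eq_dec (i-1) 0) as [E|E]; [rewrite E; simpl; unfold Rdiv; rewrite Rinv_0; lra|].
  apply Rdiv_le_0_compat; auto. apply lt_0_INR; lia.
Qed.

Lemma recip_profile_sum M K n : 0 <= M -> 0 <= K ->
  rsum 0 n (recip_profile M K) <= 2 * M + K * rsum 1 n (fun i => / INR i).
Proof.
  intros HM HK.
  assert (Hprof: rsum 0 n (recip_profile M K) <= INR (Nat.min n 2) * M + K * rsum 1 (n - 2) (fun i => / INR i)).
  { induction n.
    - rewrite !rsum_0. simpl. lra.
    - rewrite rsum_Sr. simpl (0 + n)%nat. unfold recip_profile at 2. destruct (n <=? 1)%nat eqn:E.
      + apply Nat.leb_le in E. replace (S n - 2)%nat with 0%nat by lia. replace (n - 2)%nat with 0%nat in IHn by lia.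
        rewrite rsum_0 in *. destruct n as [|[|]]; simpl in *; try lia; lra.
      + apply Nat.leb_gt in E. replace (Nat.min (S n) 2) with 2%nat by lia. replace (Nat.min n 2) with 2%nat in IHn by lia.
        replace (S n - 2)%nat with (S (n - 2)) by lia. rewrite rsum_Sr. replace (1 + (n - 2))%nat with (n - 1)%nat by lia.
        assert (0 < INR (n - 1)) by (apply lt_0_INR; lia).
        unfold Rdiv. lra. }
  eapply Rle_trans; [apply Hprof|].
  assert (INR (Nat.min n 2) <= 2) by (replace 2 with (INR 2) by reflexivity; apply le_INR; lia).
  assert (rsum 1 (n - 2) (fun i => / INR i) <= rsum 1 n (fun i => / INR i)).
  { apply rsum_le_longer; [|lia]. intros x. destruct x; [simpl; rewrite Rinv_0; lra|]. left; apply Rinv_0_lt_compat, lt_0_INR; lia. }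
  nra.
Qed.

Lemma affine_mod_injective q a c y1 y2 : Nat.gcd a q = 1%nat -> (y1 < q)%nat -> (y2 < q)%nat ->
  ((c + y1 * a) mod q = (c + y2 * a) mod q)%nat -> y1 = y2.
Proof.
  intros Hg H1 H2 Hm.
  assert (Hq: (q <> 0)%nat) by lia.
  assert (gen: forall y1 y2, (y1 < y2)%nat -> (y2 < q)%nat -> ((c + y1 * a) mod q = (c + y2 * a) mod q)%nat -> False).
  { clear y1 y2 H1 H2 Hm. intros y1 y2 Hlt Hy2 Hm.
    pose proof (Nat.div_mod (c + y1 * a) q Hq) as E1.
    pose proof (Nat.div_mod (c + y2 * a) q Hq) as E2.
    set (w1 := ((c + y1 * a) / q)%nat) in *. set (w2 := ((c + y2 * a) / q)%nat) in *.
    assert (Hd: Nat.divide q (a * (y2 - y1))).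
    { exists (w2 - w1)%nat. rewrite Nat.mul_sub_distr_r, Nat.mul_sub_distr_l.
      assert (y1 * a <= y2 * a)%nat by (apply Nat.mul_le_mono_r; lia).
      rewrite (Nat.mul_comm a y2), (Nat.mul_comm a y1), (Nat.mul_comm w2 q), (Nat.mul_comm w1 q). lia. }
    apply Nat.gauss in Hd; [|rewrite Nat.gcd_comm; auto].
    apply Nat.divide_pos_le in Hd; lia. }
  destruct (Nat.lt_total y1 y2) as [Hl|[He|Hl]]; auto.
  - exfalso; apply (gen y1 y2); auto.
  - exfalso; apply (gen y2 y1); auto.
Qed.

Lemma dist_Z_affine_fraction (q a c y : nat) (gam : R) : (1 <= q)%nat ->
  INR c <= INR q * gam < INR c + 1 ->
  INR (Nat.min ((c + y * a) mod q) (q - 1 - (c + y * a) mod q)) / INR q <= dist_Z (gam + INR y * INR a / INR q).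
Proof.
  intros Hq [Hc1 Hc2].
  assert (Hqr: 0 < INR q) by (apply lt_0_INR; lia).
  destruct (dist_Z_attained (gam + INR y * INR a / INR q)) as [n Hn]. rewrite Hn.
  set (m := ((c + y * a) mod q)%nat). set (w := ((c + y * a) / q)%nat).
  pose proof (Nat.div_mod (c + y * a) q ltac:(lia)) as E. fold w m in E.
  assert (Hm: (m < q)%nat) by (apply Nat.mod_upper_bound; lia).
  assert (ER: INR c + INR y * INR a = INR q * INR w + INR m) by (rewrite <- mult_INR, <- plus_INR, <- mult_INR, <- plus_INR; f_equal; lia).
  set (rho := INR q * gam - INR c).
  set (t := (Z.of_nat w - n)%Z).
  assert (EQ: INR q * (gam + INR y * INR a / INR q - IZR n) = rho + INR m + INR q * IZR t).
  { unfold rho, t. rewrite minus_IZR, <- INR_IZR_INZ. field_simplify; [|lra]. 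
    apply Rmult_eq_reg_r with (INR q); [|lra]. field_simplify; try lra. nra. }
  apply Rmult_le_reg_l with (INR q); auto.
  replace (INR q * (INR (Nat.min m (q - 1 - m)) / INR q)) with (INR (Nat.min m (q - 1 - m))) by (field; lra).
  replace (INR q * Rabs (gam + INR y * INR a / INR q - IZR n)) with (Rabs (INR q * (gam + INR y * INR a / INR q - IZR n))) by (rewrite Rabs_mult, (Rabs_right (INR q)); lra).
  rewrite EQ.
  assert (Hrho: 0 <= rho < 1) by (unfold rho; lra).
  destruct (Z_le_gt_dec 0 t).
  - assert (0 <= IZR t) by (apply IZR_le; lia).
    rewrite Rabs_right by (apply Rle_ge; pose proof (pos_INR m); nra).
    assert (INR (Nat.min m (q - 1 - m)) <= INR m) by (apply le_INR; lia). nra.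
  - assert (IZR t <= -1) by (apply IZR_le; lia).
    assert (INR m + 1 <= INR q) by (rewrite <- S_INR; apply le_INR; lia).
    rewrite Rabs_left by nra.
    assert (INR (Nat.min m (q - 1 - m)) <= INR q - 1 - INR m).
    { replace (INR q - 1 - INR m) with (INR (q - 1 - m)) by (rewrite !minus_INR by lia; simpl; ring).
      apply le_INR; lia. }
    nra.
Qed.

Lemma weyl_weight_le_recip_profile M q m x th : (m < q)%nat ->
  INR (Nat.min m (q - 1 - m)) / INR q - / INR q <= dist_Z (INR x * th) ->
  weyl_weight M th x <= recip_profile (INR M) (INR q) m + recip_profile (INR M) (INR q) (q - 1 - m).
Proof.
  intros Hm Hx.
  assert (Hqr: 0 < INR q) by (apply lt_0_INR; lia).
  pose proof (recip_profile_ge_0 (INR M) (INR q) m (pos_INR M) (pos_INR q)).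
  pose proof (recip_profile_ge_0 (INR M) (INR q) (q - 1 - m) (pos_INR M) (pos_INR q)).
  pose proof (weyl_weight_le M th x).
  set (mu := Nat.min m (q - 1 - m)) in *.
  destruct (le_lt_dec mu 1) as [Hmu|Hmu].
  - assert (Hcase : recip_profile (INR M) (INR q) m = INR M \/
                    recip_profile (INR M) (INR q) (q - 1 - m) = INR M).
    { unfold recip_profile. destruct (Nat.le_gt_cases m (q - 1 - m)).
      - left. replace (m <=? 1)%nat with true; auto. symmetry; apply Nat.leb_le; lia.
      - right. replace (q - 1 - m <=? 1)%nat with true; auto. symmetry; apply Nat.leb_le; lia. }
    destruct Hcase; lra.
  - assert (HmuR: 2 <= INR mu) by (replace 2 with (INR 2) by reflexivity; apply le_INR; lia).
    assert (Hpos: (INR mu - 1) / INR q <= dist_Z (INR x * th)).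
    { replace ((INR mu - 1) / INR q) with (INR mu / INR q - / INR q) by (field; lra). lra. }
    assert (Hpos2: 0 < (INR mu - 1) / INR q) by (apply Rdiv_lt_0_compat; lra).
    assert (HG: weyl_weight M th x <= INR q / (INR mu - 1)).
    { unfold weyl_weight. destruct (Rle_dec (dist_Z (INR x * th)) 0) as [Hn|Hn]; [lra|].
      eapply Rle_trans; [apply Rmin_r|].
      replace (INR q / (INR mu - 1)) with (/ ((INR mu - 1) / INR q)) by (field; lra).
      apply Rinv_le_contravar; lra. }
    assert (Hcase : INR q / (INR mu - 1) = recip_profile (INR M) (INR q) m \/
                    INR q / (INR mu - 1) = recip_profile (INR M) (INR q) (q - 1 - m)).
    { unfold recip_profile, mu in *. destruct (Nat.le_gt_cases m (q - 1 - m)).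
      - left. rewrite Nat.min_l in * by lia. replace (m <=? 1)%nat with false by (symmetry; apply Nat.leb_gt; lia).
        rewrite minus_INR by lia. reflexivity.
      - right. rewrite Nat.min_r in * by lia. replace (q - 1 - m <=? 1)%nat with false by (symmetry; apply Nat.leb_gt; lia).
        rewrite (minus_INR (q - 1 - m) 1) by lia. reflexivity. }
    destruct Hcase; lra.
Qed.

(* On a block of [q] consecutive integers the points [x th] lie within [1/q] of the
   [q] distinct fractions [(c + y a)/q], one in each residue class. *)
Lemma weyl_weight_block_bound (M q a Q b : nat) (th be : R) :
  (1 <= q <= Q)%nat -> Nat.gcd a q = 1%nat -> 0 <= th ->
  th = INR a / INR q + be -> Rabs be <= / (INR q * INR Q) ->
  rsum 0 q (fun y => weyl_weight M th (b * q + y)%nat) <= 4 * INR M + 4 * INR q * sqrt (INR q).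
Proof.
  intros Hq Hg Hth Eth Hbe.
  assert (Hqr: 0 < INR q) by (apply lt_0_INR; lia).
  assert (HQr: INR q <= INR Q) by (apply le_INR; lia).
  set (gam := INR (b * q) * th).
  assert (Hg0: 0 <= INR q * gam) by (unfold gam; apply Rmult_le_pos; [lra| apply Rmult_le_pos; auto; apply pos_INR]).
  set (c := Z.to_nat (Int_part (INR q * gam))).
  assert (Hc: INR c <= INR q * gam < INR c + 1).
  { pose proof (frac_part_bounds (INR q * gam)) as Hf. unfold frac_part in Hf.
    assert (-1 < Int_part (INR q * gam))%Z.
    { apply lt_IZR. destruct (base_Int_part (INR q * gam)). lra. }
    unfold c. rewrite INR_IZR_INZ, Z2Nat.id by lia. lra. }
  set (m := fun y => ((c + y * a) mod q)%nat).
  assert (Hm: forall y, (m y < q)%nat) by (intros; apply Nat.mod_upper_bound; lia).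
  assert (Hpt: forall y, (y < q)%nat ->
     weyl_weight M th (b * q + y) <= recip_profile (INR M) (INR q) (m y) + recip_profile (INR M) (INR q) (q - 1 - m y)).
  { intros y Hy. apply weyl_weight_le_recip_profile; [apply Hm|].
    pose proof (dist_Z_affine_fraction q a c y gam ltac:(lia) Hc) as Hf. fold (m y) in Hf.
    pose proof (dist_Z_lipschitz (INR (b * q + y) * th) (gam + INR y * INR a / INR q)).
    assert (Rabs (INR (b * q + y) * th - (gam + INR y * INR a / INR q)) <= / INR q).
    { replace (INR (b * q + y) * th - (gam + INR y * INR a / INR q)) with (INR y * be)
        by (unfold gam; rewrite Eth, plus_INR; field; lra).
      rewrite Rabs_mult, Rabs_right by (apply Rle_ge, pos_INR).
      assert (INR y <= INR Q) by (apply le_INR; lia).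
      apply Rle_trans with (INR Q * / (INR q * INR Q)).
      - apply Rmult_le_compat; auto; try apply pos_INR; apply Rabs_pos.
      - right. field. lra. }
    lra. }
  eapply Rle_trans; [apply rsum_le with (G := fun y => recip_profile (INR M) (INR q) (m y) + recip_profile (INR M) (INR q) (q - 1 - m y)); intros; apply Hpt; lia|].
  rewrite rsum_plus.
  rewrite (rsum_reindex 0 q m (recip_profile (INR M) (INR q))).
  2:{ intros; auto. }
  2:{ intros y1 y2 H1 H2 He. apply (affine_mod_injective q a c y1 y2); auto; lia. }
  rewrite (rsum_reindex 0 q (fun y => q - 1 - m y)%nat (recip_profile (INR M) (INR q))).
  2:{ intros; lia. }
  2:{ intros y1 y2 H1 H2 He. assert (m y1 = m y2) by (pose proof (Hm y1); pose proof (Hm y2); lia).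
      apply (affine_mod_injective q a c y1 y2); auto; lia. }
  pose proof (recip_profile_sum (INR M) (INR q) q (pos_INR M) (pos_INR q)).
  pose proof (harmonic_le_sqrt q).
  assert (INR q * rsum 1 q (fun i => / INR i) <= INR q * (2 * sqrt (INR q))) by (apply Rmult_le_compat_l; lra).
  lra.
Qed.

Lemma weyl_sum_minor_arc (M q a Q : nat) (th be : R) :
  (1 <= q <= Q)%nat -> Nat.gcd a q = 1%nat -> 0 <= th ->
  th = INR a / INR q + be -> Rabs be <= / (INR q * INR Q) ->
  Cmod (weyl_sum M th) ^ 2 <= INR M + 2 * (2 * INR M / INR q + 1) * (4 * INR M + 4 * INR q * sqrt (INR q)).
Proof.
  intros Hq Hg Hth Eth Hbe.
  assert (Hqr: 0 < INR q) by (apply lt_0_INR; lia).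
  eapply Rle_trans; [apply weyl_differencing|]. apply Rplus_le_compat_l. rewrite Rmult_assoc. apply Rmult_le_compat_l; [lra|].
  set (nb := ((2 * M) / q + 1)%nat).
  assert (Hnb: (2 * M + 1 <= q * nb)%nat).
  { unfold nb. pose proof (Nat.div_mod (2 * M) q ltac:(lia)). pose proof (Nat.mod_upper_bound (2 * M) q ltac:(lia)). nia. }
  eapply Rle_trans; [apply rsum_even_le; apply weyl_weight_ge_0|].
  eapply Rle_trans; [apply rsum_le_longer; [apply weyl_weight_ge_0| exact Hnb]|].
  rewrite rsum_blocks.
  eapply Rle_trans; [apply rsum_le with (G := fun _ => 4 * INR M + 4 * INR q * sqrt (INR q)); intros b _; eapply weyl_weight_block_bound; eauto|].
  rewrite rsum_const.
  assert (Hsq: 0 <= sqrt (INR q)) by apply sqrt_pos.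
  assert (0 <= 4 * INR M + 4 * INR q * sqrt (INR q)) by (pose proof (pos_INR M); nra).
  apply Rmult_le_compat_r; auto.
  unfold nb. rewrite plus_INR. simpl (INR 1). apply Rplus_le_compat_r.
  apply Rmult_le_reg_l with (INR q); auto. rewrite <- mult_INR.
  replace (INR q * (2 * INR M / INR q)) with (INR (2 * M)) by (rewrite mult_INR; simpl; field; lra).
  apply le_INR. apply Nat.Div0.mul_div_le.
Qed.

Lemma progression_phase_step_bounds (q M s0 Q x : nat) (be : R) :
  (1 <= q)%nat -> (4 * M + 2 * q <= Q)%nat -> 0 < be -> be <= / (INR q * INR Q) -> (s0 <= x <= M)%nat ->
  PI * (2 * be * INR q * INR s0) <= PI * be * INR q * (2 * INR x + INR q) <= PI / 2.
Proof.
  intros Hq HQ Hbe Hbe2 Hx.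
  assert (Hqr: 0 < INR q) by (apply lt_0_INR; lia).
  assert (HQr: 0 < INR Q) by (apply lt_0_INR; lia).
  assert (Hx1: INR s0 <= INR x) by (apply le_INR; lia).
  assert (Hx2: INR x <= INR M) by (apply le_INR; lia).
  assert (HMQ: 4 * INR M + 2 * INR q <= INR Q).
  { replace (4 * INR M + 2 * INR q) with (INR (4 * M + 2 * q)) by (rewrite plus_INR, !mult_INR; simpl; ring).
    apply le_INR; lia. }
  pose proof PI_gt_3. split.
  - assert (0 < PI * be * INR q) by (apply Rmult_lt_0_compat; [apply Rmult_lt_0_compat|]; lra).
    replace (PI * (2 * be * INR q * INR s0)) with ((PI * be * INR q) * (2 * INR s0)) by ring. nra.
  - assert (HqQ: be * INR q * INR Q <= 1).
    { apply Rmult_le_compat_r with (r := INR q * INR Q) in Hbe2; [|nra]. rewrite Rinv_l in Hbe2 by nra. nra. }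
    assert (be * INR q * (2 * INR x + INR q) <= 1/2).
    { apply Rle_trans with (be * INR q * (INR Q / 2)); [apply Rmult_le_compat_l; nra| nra]. }
    replace (PI * be * INR q * (2 * INR x + INR q)) with (PI * (be * INR q * (2 * INR x + INR q))) by ring.
    nra.
Qed.

(* Along the residue class [y] mod [q] the phase [s^2 a/q] is constant modulo 1,
   so only the [be]-part remains, and its increments are monotone. *)
Lemma weyl_cos_progression_bound (q y M s0 Q nb : nat) (psi be : R) (a : Z) :
  (1 <= q)%nat -> (1 <= s0)%nat -> (4 * M + 2 * q <= Q)%nat -> 0 < be -> be <= / (INR q * INR Q) ->
  Rabs (rsum 0 nb (fun b => if ((s0 <=? b * q + y) && (b * q + y <=? M))%nat
        then cos (2 * PI * (INR ((b * q + y) * (b * q + y)) * (IZR a / INR q + be)) + psi) else 0))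
  <= 1 + / (2 * be * INR q * INR s0).
Proof.
  intros Hq Hs0 HQ Hbe Hbe2.
  assert (Hqr: 0 < INR q) by (apply lt_0_INR; lia).
  assert (HQr: 0 < INR Q) by (apply lt_0_INR; lia).
  assert (Hs0r: 1 <= INR s0) by (replace 1 with (INR 1) by reflexivity; apply le_INR; lia).
  destruct (rsum_indicator_interval nb (fun b => ((s0 <=? b * q + y) && (b * q + y <=? M))%nat)
     (fun b => cos (2 * PI * (INR ((b * q + y) * (b * q + y)) * (IZR a / INR q + be)) + psi))) as [A [len [E [Hin _]]]].
  { intros u v w Hu Hw Huvw. apply andb_true_iff in Hu as [Hu1 Hu2]. apply andb_true_iff in Hw as [Hw1 Hw2].
    apply Nat.leb_le in Hu1, Hu2, Hw1, Hw2. apply andb_true_iff; split; apply Nat.leb_le; nia. }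
  rewrite E.
  set (th := fun b : nat => 2 * PI * (INR (y * y) * IZR a / INR q) + psi + 2 * PI * be * INR ((b * q + y) * (b * q + y))).
  set (d := fun b : nat => PI * be * INR q * (2 * INR (b * q + y) + INR q)).
  rewrite (rsum_ext A len _ (fun b => cos (th b))).
  2:{ intros b _. unfold th.
      replace (2 * PI * (INR ((b * q + y) * (b * q + y)) * (IZR a / INR q + be)) + psi)
        with (2 * PI * (INR (y * y) * IZR a / INR q) + psi + 2 * PI * be * INR ((b * q + y) * (b * q + y))
              + 2 * IZR (a * Z.of_nat (b * b * q + 2 * b * y)) * PI).
      - apply cos_period_Z.
      - rewrite mult_IZR, <- INR_IZR_INZ. rewrite !mult_INR, !plus_INR, !mult_INR. simpl (INR 2). field. lra. }
  apply (kusmin_landau A len th d (2 * be * INR q * INR s0)).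
  - apply Rmult_lt_0_compat; [|lra]. apply Rmult_lt_0_compat; lra.
  - intros b Hb. specialize (Hin b Hb). apply andb_true_iff in Hin as [Hlo Hhi].
    apply Nat.leb_le in Hlo, Hhi. split.
    + unfold th, d. rewrite !mult_INR, !plus_INR, !mult_INR, S_INR. ring.
    + apply (progression_phase_step_bounds q M s0 Q); auto.
  - intros b Hb1 Hb2. unfold d. rewrite !plus_INR, !mult_INR, S_INR.
    assert (0 <= PI * be * INR q) by (pose proof PI_gt_3; apply Rmult_le_pos; [apply Rmult_le_pos|]; lra). nra.
Qed.

Lemma weyl_cos_tail_bound (q M s0 Q : nat) (psi be : R) (a : Z) :
  (1 <= q)%nat -> (1 <= s0)%nat -> (4 * M + 2 * q <= Q)%nat -> 0 < be -> be <= / (INR q * INR Q) ->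
  Rabs (rsum 1 M (fun s => if (s0 <=? s)%nat then cos (2 * PI * (INR (s * s) * (IZR a / INR q + be)) + psi) else 0))
  <= INR q + / (2 * be * INR s0).
Proof.
  intros Hq Hs0 HQ Hbe Hbe2.
  assert (Hqr: 0 < INR q) by (apply lt_0_INR; lia).
  set (F := fun s => if ((s0 <=? s) && (s <=? M))%nat then cos (2 * PI * (INR (s * s) * (IZR a / INR q + be)) + psi) else 0).
  set (nb := (M / q + 1)%nat).
  assert (Hnb: (M + 1 <= q * nb)%nat).
  { unfold nb. pose proof (Nat.div_mod M q ltac:(lia)). pose proof (Nat.mod_upper_bound M q ltac:(lia)). nia. }
  assert (E: rsum 1 M (fun s => if (s0 <=? s)%nat then cos (2 * PI * (INR (s * s) * (IZR a / INR q + be)) + psi) else 0)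
     = rsum 0 (q * nb) F).
  { assert (EM: rsum 0 (q * nb) F = rsum 0 (1 + M + (q * nb - (1 + M))) F) by (f_equal; lia).
    rewrite EM, !rsum_split. rewrite (rsum_ext (0 + (1 + M)) _ F (fun _ => 0)).
    2:{ intros s Hs. unfold F. replace (s <=? M)%nat with false by (symmetry; apply Nat.leb_gt; lia).
        rewrite andb_false_r. reflexivity. }
    rewrite rsum_zero, Rplus_0_r. rewrite rsum_S, rsum_0.
    assert (F0: F 0%nat = 0) by (unfold F; replace (s0 <=? 0)%nat with false by (symmetry; apply Nat.leb_gt; lia); reflexivity).
    rewrite F0. match goal with |- _ = ?z + ?w => transitivity w; [|lra] end. simpl (0 + 1)%nat. apply rsum_ext. intros s Hs. unfold F.
    replace (s <=? M)%nat with true by (symmetry; apply Nat.leb_le; lia). rewrite andb_true_r. reflexivity. }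
  rewrite E, rsum_blocks, rsum_swap.
  eapply Rle_trans; [apply rsum_abs|].
  eapply Rle_trans; [apply rsum_le with (G := fun _ => 1 + / (2 * be * INR q * INR s0))|].
  - intros y _. unfold F. apply (weyl_cos_progression_bound q y M s0 Q nb psi be a); auto.
  - rewrite rsum_const. right. field. split; [|split]; try lra.
    assert (1 <= INR s0) by (replace 1 with (INR 1) by reflexivity; apply le_INR; lia). lra.
Qed.

Lemma weyl_cos_major_arc (q M s0 Q : nat) (psi be : R) (a : Z) :
  (1 <= q)%nat -> (1 <= s0)%nat -> (4 * M + 2 * q <= Q)%nat -> 0 < be -> be <= / (INR q * INR Q) ->
  Rabs (rsum 1 M (fun s => cos (2 * PI * (INR (s * s) * (IZR a / INR q + be)) + psi)))
  <= INR s0 - 1 + INR q + / (2 * be * INR s0).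
Proof.
  intros Hq Hs0 HQ Hbe Hbe2. set (F := fun s => cos (2 * PI * (INR (s * s) * (IZR a / INR q + be)) + psi)).
  rewrite (rsum_ext 1 M F (fun s => (if (s0 <=? s)%nat then 0 else F s) + (if (s0 <=? s)%nat then F s else 0))).
  2:{ intros. destruct (s0 <=? i)%nat; ring. }
  rewrite rsum_plus. eapply Rle_trans; [apply Rabs_triang|].
  pose proof (rsum_head_bound M s0 F Hs0 (fun s => Rabs_le _ _ (COS_bound _))).
  pose proof (weyl_cos_tail_bound q M s0 Q psi be a Hq Hs0 HQ Hbe Hbe2). unfold F in *. lra.
Qed.

(* The trivial bound for [s < s0] and Kusmin-Landau for [s >= s0], with [s0] about [be^(-1/2)]. *)
Lemma weyl_sum_major_arc_pos (M q Q : nat) (a : Z) (th be : R) :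
  (1 <= q)%nat -> (4 * M + 2 * q <= Q)%nat -> th = IZR a / INR q + be -> 0 < be -> be <= / (INR q * INR Q) ->
  Cmod (weyl_sum M th) <= 3 / sqrt be + 2 * INR q.
Proof.
  intros Hq HQ Eth Hbe Hbe2.
  set (x := / sqrt be).
  assert (Hsb: 0 < sqrt be) by (apply sqrt_lt_R0; auto).
  assert (Hx: 0 < x) by (apply Rinv_0_lt_compat; auto).
  assert (Hbx: be * x * x = 1) by (unfold x; rewrite <- (sqrt_sqrt be) at 1 by lra; field; lra).
  destruct (archimed x) as [Hu1 Hu2].
  assert (Hup: (0 < up x)%Z) by (apply lt_IZR; simpl; lra).
  set (s0 := Z.to_nat (up x)).
  assert (Hs0: INR s0 = IZR (up x)) by (unfold s0; rewrite INR_IZR_INZ, Z2Nat.id by lia; reflexivity).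
  assert (Hs01: (1 <= s0)%nat) by (unfold s0; lia).
  eapply Rle_trans; [apply Cmod_le_Rabs_fst_snd|].
  unfold weyl_sum. rewrite fst_csum, snd_csum. unfold e; simpl fst; simpl snd.
  rewrite (rsum_ext 1 M (fun i => cos (2 * PI * (INR (i * i) * th))) (fun s => cos (2 * PI * (INR (s * s) * (IZR a / INR q + be)) + 0))).
  2:{ intros. rewrite Eth, Rplus_0_r. reflexivity. }
  rewrite (rsum_ext 1 M (fun i => sin (2 * PI * (INR (i * i) * th))) (fun s => cos (2 * PI * (INR (s * s) * (IZR a / INR q + be)) + - (PI / 2)))).
  2:{ intros. rewrite Eth. rewrite <- cos_neg, <- cos_shift. f_equal. ring. }
  pose proof (weyl_cos_major_arc q M s0 Q 0 be a Hq Hs01 HQ Hbe Hbe2).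
  pose proof (weyl_cos_major_arc q M s0 Q (- (PI / 2)) be a Hq Hs01 HQ Hbe Hbe2).
  assert (/ (2 * be * INR s0) <= x / 2).
  { assert (x <= INR s0) by lra.
    apply Rmult_le_reg_r with (2 * be * INR s0); [nra|]. rewrite Rinv_l by nra. nra. }
  assert (INR s0 - 1 <= x) by lra.
  unfold Rdiv. replace (3 * / sqrt be) with (3 * x) by reflexivity. lra.
Qed.

Lemma weyl_sum_major_arc (M q Q : nat) (a : Z) (th be : R) :
  (1 <= q)%nat -> (4 * M + 2 * q <= Q)%nat -> th = IZR a / INR q + be -> be <> 0 -> Rabs be <= / (INR q * INR Q) ->
  Cmod (weyl_sum M th) <= 3 / sqrt (Rabs be) + 2 * INR q.
Proof.
  intros Hq HQ Eth Hbe Hbe2.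
  destruct (Rle_dec 0 be).
  - rewrite Rabs_right in * by lra. apply (weyl_sum_major_arc_pos M q Q a); auto. lra.
  - rewrite Rabs_left in * by lra. rewrite <- Cmod_weyl_sum_opp. apply (weyl_sum_major_arc_pos M q Q (- a)); auto; try lra.
    rewrite Eth, opp_IZR. field. apply not_0_INR; lia.
Qed.

(** * The discrete circle method *)

Lemma ind_S_rsum n Mx : (1 <= n)%nat -> (Nat.sqrt n <= Mx)%nat ->
  ind_S n = rsum 1 Mx (fun s => if Nat.eqb (s * s) n then 1 else 0).
Proof.
  intros Hn HM. unfold ind_S.
  destruct (Nat.eqb (Nat.sqrt n * Nat.sqrt n) n) eqn:E.
  - apply Nat.eqb_eq in E. set (s0 := Nat.sqrt n) in *.
    rewrite (rsum_ext 1 Mx _ (fun s => if Nat.eqb s s0 then 1 else 0)).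
    + rewrite rsum_delta. replace (Nat.leb 1 s0 && Nat.ltb s0 (1 + Mx))%bool with true; auto.
      symmetry. apply andb_true_iff. split.
      * apply Nat.leb_le. assert (s0 <> 0)%nat by (intro Hz; rewrite Hz in E; simpl in E; lia). lia.
      * apply Nat.ltb_lt. lia.
    + intros s _. destruct (Nat.eqb (s * s) n) eqn:E1, (Nat.eqb s s0) eqn:E2; auto;
      rewrite ?Nat.eqb_eq, ?Nat.eqb_neq in *; [|rewrite E2 in E1; lia].
      exfalso; apply E2. rewrite <- E in E1. destruct (Nat.lt_total s s0) as [H|[H|H]]; auto; nia.
  - rewrite (rsum_ext 1 Mx _ (fun _ => 0)); [rewrite rsum_zero; reflexivity|].
    intros s _. destruct (Nat.eqb (s * s) n) eqn:E1; auto. apply Nat.eqb_eq in E1.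
    rewrite <- E1, Nat.sqrt_square in E. rewrite Nat.eqb_refl in E. discriminate.
Qed.

Lemma ext_in_range N f m : (1 <= m <= N)%nat -> ext N f (Z.of_nat m) = f m.
Proof.
  intros H. unfold ext. replace ((1 <=? Z.of_nat m)%Z && (Z.of_nat m <=? Z.of_nat N)%Z)%bool with true.
  - rewrite Nat2Z.id. reflexivity.
  - symmetry. apply andb_true_iff; split; apply Z.leb_le; lia.
Qed.

Lemma ext_sub_rsum N g n m : ext N g (Z.of_nat n - Z.of_nat m) = rsum 1 N (fun l => if Nat.eqb (m + l) n then g l else 0).
Proof.
  destruct (le_lt_dec n m) as [Hnm|Hnm].
  - rewrite (rsum_ext 1 N _ (fun _ => 0)).
    + rewrite rsum_zero. unfold ext. replace ((1 <=? Z.of_nat n - Z.of_nat m)%Z) with false by (symmetry; apply Z.leb_gt; lia). reflexivity.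
    + intros l Hl. replace (Nat.eqb (m + l) n) with false by (symmetry; apply Nat.eqb_neq; lia). reflexivity.
  - rewrite (rsum_ext 1 N _ (fun l => if Nat.eqb l (n - m) then g l else 0)).
    + rewrite rsum_delta. unfold ext. replace (Z.of_nat n - Z.of_nat m)%Z with (Z.of_nat (n - m)) by lia.
      rewrite Nat2Z.id.
      destruct (Nat.leb 1 (n - m) && Nat.ltb (n - m) (1 + N))%bool eqn:E1;
      destruct ((1 <=? Z.of_nat (n - m))%Z && (Z.of_nat (n - m) <=? Z.of_nat N)%Z)%bool eqn:E2; auto;
      rewrite ?andb_true_iff, ?andb_false_iff, ?Nat.leb_le, ?Nat.ltb_lt, ?Z.leb_le, ?Nat.leb_gt, ?Nat.ltb_ge, ?Z.leb_gt in *; lia.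
    + intros l Hl. destruct (Nat.eqb (m + l) n) eqn:E1, (Nat.eqb l (n - m)) eqn:E2; auto;
      rewrite ?Nat.eqb_eq, ?Nat.eqb_neq in *; lia.
Qed.

Lemma square_count_identity N Mx f g : Mx = Nat.sqrt (2 * N) ->
  sumR 1 (2 * N) (fun n => conv N f g (Z.of_nat n) * ind_S n) =
  rsum 1 N (fun m => rsum 1 N (fun l => f m * g l * rsum 1 Mx (fun s => if Nat.eqb (s * s) (m + l) then 1 else 0))).
Proof.
  intros HM. rewrite sumR_rsum. replace (S (2 * N) - 1)%nat with (2 * N)%nat by lia.
  rewrite (rsum_ext 1 (2 * N) _ (fun n => rsum 1 N (fun m => rsum 1 N (fun l => f m * g l * (if Nat.eqb (m + l) n then ind_S n else 0))))).
  2:{ intros n Hn. unfold conv. rewrite sumR_rsum. replace (S N - 1)%nat with N by lia.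
      rewrite <- rsum_scal_r. apply rsum_ext. intros m Hm. rewrite ext_in_range by lia. rewrite ext_sub_rsum.
      rewrite <- rsum_scal, <- rsum_scal_r. apply rsum_ext. intros l Hl. destruct (Nat.eqb (m + l) n); ring. }
  rewrite rsum_swap. apply rsum_ext. intros m Hm. rewrite rsum_swap. apply rsum_ext. intros l Hl.
  rewrite (rsum_ext 1 (2 * N) _ (fun n => f m * g l * (if Nat.eqb n (m + l) then ind_S n else 0))).
  2:{ intros n _. rewrite Nat.eqb_sym. reflexivity. }
  rewrite rsum_scal. rewrite rsum_delta.
  replace (Nat.leb 1 (m + l) && Nat.ltb (m + l) (1 + 2 * N))%bool with true.
  - rewrite (ind_S_rsum (m + l) Mx); [reflexivity|lia|]. rewrite HM. apply Nat.sqrt_le_mono. lia.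
  - symmetry; apply andb_true_iff; split; [apply Nat.leb_le| apply Nat.ltb_lt]; lia.
Qed.

Lemma fhat_csum N f th : fhat N f th = csum 1 N (fun n => Cmult (RtoC (f n)) (e (- INR n * th))).
Proof. unfold fhat. rewrite sumC_csum. f_equal. lia. Qed.

Lemma fst_fhat_fhat_weyl_sum N M f g th :
  fst (Cmult (Cmult (fhat N f th) (fhat N g th)) (weyl_sum M th)) =
  rsum 1 N (fun m => rsum 1 N (fun l => rsum 1 M (fun s =>
     f m * g l * cos (2 * PI * ((INR (s * s) - INR m - INR l) * th))))).
Proof.
  rewrite !fhat_csum. rewrite csum_mult_r, csum_mult_r, fst_csum. apply rsum_ext. intros m _.
  rewrite csum_mult_l, csum_mult_r, fst_csum. apply rsum_ext. intros l _.
  unfold weyl_sum. rewrite csum_mult_l, fst_csum. apply rsum_ext. intros s _.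
  unfold e, Cmult, RtoC; simpl.
  replace (2 * PI * ((INR (s * s) - INR m - INR l) * th)) with
    ((2 * PI * (- INR m * th) + 2 * PI * (- INR l * th)) + 2 * PI * (INR (s * s) * th)) by ring.
  rewrite cos_plus, cos_plus, sin_plus. ring.
Qed.

(* Orthogonality of [j |-> e(j d / P)] on [Z/PZ]; with [P = 2N] every difference
   [d = s^2 - m - l] satisfies [|d| < P], so only the solutions of [s^2 = m + l] survive. *)
Lemma circle_method_identity N f g (P : nat) : (1 <= N)%nat -> P = (2 * N)%nat ->
  rsum 0 P (fun j => fst (Cmult (Cmult (fhat N f (INR j / INR P)) (fhat N g (INR j / INR P))) (weyl_sum (Nat.sqrt (2 * N)) (INR j / INR P))))
  = INR P * sumR 1 (2 * N) (fun n => conv N f g (Z.of_nat n) * ind_S n).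
Proof.
  intros HN HP. set (Mx := Nat.sqrt (2 * N)).
  rewrite (square_count_identity N Mx f g eq_refl).
  rewrite (rsum_ext 0 P _ (fun j => rsum 1 N (fun m => rsum 1 N (fun l => rsum 1 Mx (fun s =>
     f m * g l * cos (2 * PI * ((INR (s * s) - INR m - INR l) * (INR j / INR P)))))))).
  2:{ intros. apply fst_fhat_fhat_weyl_sum. }
  rewrite rsum_swap. rewrite <- rsum_scal. apply rsum_ext. intros m Hm.
  rewrite rsum_swap. rewrite <- rsum_scal. apply rsum_ext. intros l Hl.
  rewrite rsum_swap. rewrite <- (rsum_scal 1 Mx (f m * g l)), <- rsum_scal. apply rsum_ext. intros s Hs.
  rewrite rsum_scal.
  assert (Hss: (s * s <= 2 * N)%nat).
  { assert (s <= Mx)%nat by lia. pose proof (Nat.sqrt_spec (2 * N) ltac:(lia)) as [H1 _]. fold Mx in H1. nia. }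
  pose proof (rsum_cos_orthogonality P (Z.of_nat (s * s) - Z.of_nat m - Z.of_nat l) ltac:(lia) ltac:(lia)) as HO.
  rewrite (rsum_ext 0 P _ (fun j => cos (2 * PI * IZR (Z.of_nat (s * s) - Z.of_nat m - Z.of_nat l) * INR j / INR P))).
  2:{ intros j _. f_equal. rewrite !minus_IZR, <- !INR_IZR_INZ. field. apply not_0_INR; lia. }
  rewrite HO.
  destruct (Z.eqb (Z.of_nat (s * s) - Z.of_nat m - Z.of_nat l) 0) eqn:E1, (Nat.eqb (s * s) (m + l)) eqn:E2;
  rewrite ?Z.eqb_eq, ?Z.eqb_neq, ?Nat.eqb_eq, ?Nat.eqb_neq in *; try lia; ring.
Qed.

Lemma parseval_discrete N f (P : nat) : (1 <= N)%nat -> (N <= P)%nat ->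
  rsum 0 P (fun j => Cmod (fhat N f (INR j / INR P)) ^ 2) = INR P * rsum 1 N (fun m => f m * f m).
Proof.
  intros HN HP.
  rewrite (rsum_ext 0 P _ (fun j => rsum 1 N (fun m => rsum 1 N (fun m' => f m * f m' * cos (2 * PI * IZR (Z.of_nat m' - Z.of_nat m) * INR j / INR P))))).
  2:{ intros j _. rewrite Cmod_sqr, fhat_csum, fst_csum, snd_csum, !rsum_sqr, <- rsum_plus. apply rsum_ext. intros m _.
      rewrite <- rsum_plus. apply rsum_ext. intros m' _. unfold e, Cmult, RtoC; simpl.
      rewrite minus_IZR, <- !INR_IZR_INZ.
      replace (2 * PI * (INR m' - INR m) * INR j / INR P) with (2 * PI * (- INR m * (INR j / INR P)) - 2 * PI * (- INR m' * (INR j / INR P))) by (field; apply not_0_INR; lia).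
      rewrite cos_minus. ring. }
  rewrite rsum_swap, <- rsum_scal. apply rsum_ext. intros m Hm. rewrite rsum_swap.
  rewrite (rsum_ext 1 N _ (fun m' => f m * f m' * rsum 0 P (fun j => cos (2 * PI * IZR (Z.of_nat m' - Z.of_nat m) * INR j / INR P)))).
  2:{ intros. rewrite rsum_scal. reflexivity. }
  rewrite (rsum_ext 1 N _ (fun m' => if Nat.eqb m' m then INR P * (f m * f m') else 0)).
  2:{ intros m' Hm'. rewrite rsum_cos_orthogonality by lia.
      destruct (Z.eqb (Z.of_nat m' - Z.of_nat m) 0) eqn:E1, (Nat.eqb m' m) eqn:E2;
      rewrite ?Z.eqb_eq, ?Z.eqb_neq, ?Nat.eqb_eq, ?Nat.eqb_neq in *; try lia; ring. }
  rewrite rsum_delta. replace (Nat.leb 1 m && Nat.ltb m (1 + N))%bool with true; [ring|].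
  symmetry; apply andb_true_iff; split; [apply Nat.leb_le| apply Nat.ltb_lt]; lia.
Qed.

Lemma Cmod_fhat_le N f th : (forall n, (1 <= n <= N)%nat -> -1 <= f n <= 1) -> Cmod (fhat N f th) <= INR N.
Proof.
  intros Hf. rewrite fhat_csum. eapply Rle_trans; [apply Cmod_csum_le|].
  eapply Rle_trans; [apply rsum_le with (G := fun _ => 1)|].
  - intros n Hn. rewrite Cmod_mult, Cmod_e, Cmod_R, Rmult_1_r. apply Rabs_le. apply Hf. lia.
  - rewrite rsum_const. lra.
Qed.

Lemma fhat_add_1 N f th : fhat N f (1 + th) = fhat N f th.
Proof.
  rewrite !fhat_csum. apply csum_ext. intros n _. f_equal.
  replace (- INR n * (1 + th)) with (- INR n * th - INR n) by ring. apply e_sub_nat.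
Qed.

Lemma circle_method_triangle N (f g : nat -> R) : (1 <= N)%nat ->
  INR (2 * N) * Rabs (sumR 1 (2 * N) (fun n => conv N f g (Z.of_nat n) * ind_S n)) <=
  rsum 0 (2 * N) (fun j => Cmod (fhat N f (INR j / INR (2 * N))) * Cmod (fhat N g (INR j / INR (2 * N)))
                           * Cmod (weyl_sum (Nat.sqrt (2 * N)) (INR j / INR (2 * N)))).
Proof.
  intros HN.
  rewrite <- (Rabs_right (INR (2 * N)) (Rle_ge _ _ (pos_INR _))) at 1.
  rewrite <- Rabs_mult, <- (circle_method_identity N f g (2 * N) HN eq_refl).
  eapply Rle_trans; [apply rsum_abs|]. apply rsum_le. intros j _.
  rewrite <- !Cmod_mult. apply re_le_Cmod.
Qed.

(** * Major and minor arcs *)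

Lemma fourth_root_facts (N k : R) : 1 <= k -> (10 * k) ^ 4 <= N ->
  let r := sqrt (sqrt N) in 10 * k <= r /\ sqrt N = r * r /\ N = r * r * r * r.
Proof.
  intros Hk HN r.
  assert (HN0: 0 <= N) by (assert (0 <= (10 * k)^4) by (apply pow_le; lra); lra).
  assert (E1: sqrt N = r * r) by (unfold r; rewrite sqrt_sqrt; [reflexivity| apply sqrt_pos]).
  assert (E2: N = r * r * r * r) by (rewrite <- (sqrt_sqrt N HN0), E1; ring).
  split; [|split; auto].
  assert (0 <= r) by apply sqrt_pos.
  destruct (Rle_dec (10 * k) r); auto.
  exfalso. assert (r < 10 * k) by lra.
  assert (r * r < 10 * k * (10 * k)) by nra.
  assert (r * r * (r * r) < (10 * k * (10 * k)) * (10 * k * (10 * k))) by (apply Rmult_le_0_lt_compat; nra).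
  simpl in HN. nra.
Qed.

Lemma minor_arc_numeric (M q k N : R) : 0 <= M -> M * M <= 2 * N -> k + 1 <= q -> q <= 4 * M + 2 * k -> 1 <= k ->
  (10 * k) ^ 4 <= N ->
  M + 2 * (2 * M / q + 1) * (4 * M + 4 * q * sqrt q) <= 81 * (N / k).
Proof.
  intros HM HM2 Hq1 Hq2 Hk HN.
  destruct (fourth_root_facts N k Hk HN) as [Hr [E1 E2]]. set (r := sqrt (sqrt N)) in *.
  assert (Hr0: 10 <= r) by lra.
  assert (HMr: M <= 2 * r * r) by nra.
  assert (Hq3: q <= 9 * (r * r)) by nra.
  assert (Hsq: sqrt q <= 3 * r).
  { rewrite <- (sqrt_square (3 * r)) by lra. apply sqrt_le_1_alt. nra. }
  assert (Hsq0: 0 <= sqrt q) by apply sqrt_pos.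
  assert (Hq0: 0 < q) by lra.
  replace (M + 2 * (2 * M / q + 1) * (4 * M + 4 * q * sqrt q)) with
    (16 * (M * M) / q + 16 * M * sqrt q + 9 * M + 8 * q * sqrt q) by (field; lra).
  assert (T1: 16 * (M * M) / q <= 32 * (N / k)).
  { apply Rle_trans with (16 * (2 * N) / k).
    - unfold Rdiv. apply Rmult_le_compat; try nra.
      + apply Rlt_le, Rinv_0_lt_compat; lra.
      + apply Rinv_le_contravar; lra.
    - right; field; lra. }
  assert (T2: 16 * M * sqrt q <= 96 * (r * r * r)) by nra.
  assert (T3: 8 * q * sqrt q <= 216 * (r * r * r)) by nra.
  assert (T4: 9 * M <= 18 * (r * r * r)) by nra.
  assert (T5: 330 * (r * r * r) <= 49 * (N / k)).
  { rewrite E2. apply Rmult_le_reg_r with k; [lra|]. unfold Rdiv. field_simplify; [|lra]. nra. }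
  lra.
Qed.

Lemma major_arc_numeric (be q k N : R) : 1 <= k -> (10 * k) ^ 4 <= N -> 0 <= q <= k -> k / (4 * N) <= be ->
  3 / sqrt be + 2 * q <= 9 * sqrt (N / k).
Proof.
  intros Hk HN Hq Hbe.
  destruct (fourth_root_facts N k Hk HN) as [Hr [E1 E2]]. set (r := sqrt (sqrt N)) in *.
  assert (HN0: 0 < N) by (rewrite E2; apply Rmult_lt_0_compat; [apply Rmult_lt_0_compat; [apply Rmult_lt_0_compat|]|]; lra).
  assert (Hbe0: 0 < be) by (apply Rlt_le_trans with (k / (4 * N)); auto; apply Rdiv_lt_0_compat; lra).
  assert (Hs: sqrt (k / (4 * N)) <= sqrt be) by (apply sqrt_le_1_alt; auto).
  assert (Es: sqrt (k / (4 * N)) * sqrt (N / k) = / 2).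
  { rewrite <- sqrt_mult by (apply Rlt_le, Rdiv_lt_0_compat; lra).
    replace (k / (4 * N) * (N / k)) with (/2 * / 2) by (field; lra). rewrite sqrt_square; lra. }
  assert (Hsk: 0 < sqrt (k / (4 * N))) by (apply sqrt_lt_R0, Rdiv_lt_0_compat; lra).
  assert (HsN: 0 < sqrt (N / k)) by (apply sqrt_lt_R0, Rdiv_lt_0_compat; lra).
  assert (H1: 3 / sqrt be <= 6 * sqrt (N / k)).
  { apply Rle_trans with (3 / sqrt (k / (4 * N))).
    - unfold Rdiv. apply Rmult_le_compat_l; [lra|]. apply Rinv_le_contravar; auto.
    - apply Rmult_le_reg_r with (sqrt (k / (4 * N))); auto. field_simplify; lra. }
  assert (H2: 2 * q <= 3 * sqrt (N / k)).
  { assert (Hsq: sqrt k <= k) by (rewrite <- (sqrt_square k) at 2 by lra; apply sqrt_le_1_alt; nra).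
    assert (Hsk0: 0 < sqrt k) by (apply sqrt_lt_R0; lra).
    assert (EN: sqrt (N / k) = r * r / sqrt k) by (rewrite sqrt_div_alt by lra; rewrite E1; reflexivity).
    rewrite EN. apply Rmult_le_reg_r with (sqrt k); auto. field_simplify; [|lra]. nra. }
  lra.
Qed.

Lemma INR_sqrt_mul_le n : INR (Nat.sqrt n) * INR (Nat.sqrt n) <= INR n.
Proof. rewrite <- mult_INR. apply le_INR, Nat.sqrt_spec. lia. Qed.

Lemma INR_sqrt_2N_le N : INR (Nat.sqrt (2 * N)) <= 2 * sqrt (INR N).
Proof.
  pose proof (sqrt_pos (INR N)) as Hs. pose proof (pos_INR N).
  apply Rsqr_incr_0_var; [|lra]. unfold Rsqr.
  pose proof (INR_sqrt_mul_le (2 * N)) as HM. rewrite mult_INR in HM.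
  replace (2 * sqrt (INR N) * (2 * sqrt (INR N))) with (4 * (sqrt (INR N) * sqrt (INR N))) by ring.
  change (INR 2) with 2 in HM. rewrite sqrt_sqrt; lra.
Qed.

Lemma rational_approx_of_fraction (P j Q : nat) : (j < P)%nat -> (1 <= Q)%nat ->
  exists q a, (1 <= q <= Q)%nat /\ Nat.gcd a q = 1%nat /\ (a <= q)%nat /\
    Rabs (INR j / INR P - INR a / INR q) < / (INR q * INR Q).
Proof.
  intros Hj HQ.
  destruct (dirichlet_approx_coprime P j Q ltac:(lia) ltac:(lia)) as [q [a [Hq [Hga Hz]]]].
  exists q, a. split; [exact Hq|]. split; [exact Hga|].
  assert (HPR: 0 < INR P) by (apply lt_0_INR; lia).
  assert (HqR: 0 < INR q) by (apply lt_0_INR; lia).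
  assert (HQR: 1 <= INR Q) by (replace 1 with (INR 1) by reflexivity; apply le_INR; lia).
  assert (Hzr: Rabs (INR q * INR j - INR P * INR a) * INR Q < INR P).
  { apply IZR_lt in Hz. rewrite mult_IZR, abs_IZR, minus_IZR, <- !INR_IZR_INZ, !mult_INR in Hz. exact Hz. }
  split.
  - assert (Hlt: INR P * INR a < INR q * INR j + INR P).
    { assert (Habs: Rabs (INR q * INR j - INR P * INR a) < INR P)
        by (pose proof (Rabs_pos (INR q * INR j - INR P * INR a)); nra).
      apply Rabs_def2 in Habs. lra. }
    assert (INR j + 1 <= INR P) by (rewrite <- S_INR; apply le_INR; lia).
    assert (Haq: INR a < INR q + 1) by nra.
    rewrite <- S_INR in Haq. apply INR_lt in Haq. lia.
  - replace (INR j / INR P - INR a / INR q) with ((INR q * INR j - INR P * INR a) / (INR P * INR q))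
      by (field; lra).
    unfold Rdiv. rewrite Rabs_mult, (Rabs_right (/ (INR P * INR q)))
      by (apply Rle_ge, Rlt_le, Rinv_0_lt_compat; nra).
    apply Rmult_lt_reg_r with (INR P * INR q * INR Q); [repeat apply Rmult_lt_0_compat; lra|].
    replace (Rabs (INR q * INR j - INR P * INR a) * / (INR P * INR q) * (INR P * INR q * INR Q))
      with (Rabs (INR q * INR j - INR P * INR a) * INR Q) by (field; lra).
    replace (/ (INR q * INR Q) * (INR P * INR q * INR Q)) with (INR P) by (field; lra). exact Hzr.
Qed.

(* The hypothesis only covers numerators [a >= 1]; the fraction [0/1] is reached
   through [1/1], by periodicity of [fhat]. *)
Lemma fhat_near_rational (k N : nat) (delta : R) (f : nat -> R) (q a : nat) (be : R) :
  (forall (a q : nat), (1 <= a <= k)%nat -> (1 <= q <= k)%nat ->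
       forall beta : R, Cmod (fhat N f (INR a / INR q + beta)) <= delta * Rabs beta * (INR N) ^ 2) ->
  (1 <= q <= k)%nat -> (a <= q)%nat -> Nat.gcd a q = 1%nat ->
  Cmod (fhat N f (INR a / INR q + be)) <= delta * Rabs be * INR N ^ 2.
Proof.
  intros Hyp Hq Haq Hga. destruct a as [|a'].
  - rewrite Nat.gcd_0_l in Hga. subst q.
    replace (INR 0 / INR 1 + be) with be by (simpl; field).
    rewrite <- fhat_add_1. replace (1 + be) with (INR 1 / INR 1 + be) by (simpl; field).
    apply Hyp; lia.
  - apply Hyp; lia.
Qed.

Definition major_count (k N j : nat) : R :=
  rsum 1 k (fun q => rsum 0 (k + 1) (fun a =>
    if Rlt_dec (Rabs (INR j / INR (2 * N) - INR a / INR q)) (INR k / (4 * INR N)) then 1 else 0)).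

Lemma major_count_ge_0 k N j : 0 <= major_count k N j.
Proof.
  unfold major_count. apply rsum_nonneg. intros. apply rsum_nonneg. intros. case Rlt_dec; lra.
Qed.

Lemma major_count_ge_1 (k N j q a : nat) : (1 <= q <= k)%nat -> (a <= q)%nat ->
  Rabs (INR j / INR (2 * N) - INR a / INR q) < INR k / (4 * INR N) -> 1 <= major_count k N j.
Proof.
  intros Hq Haq Hnear.
  assert (Hind: forall q' a', 0 <= (if Rlt_dec (Rabs (INR j / INR (2 * N) - INR a' / INR q'))
                                    (INR k / (4 * INR N)) then 1 else 0)).
  { intros q' a'. case Rlt_dec; lra. }
  unfold major_count. eapply Rle_trans; [|eapply (rsum_ge_term 1 k _ q)].
  - eapply Rle_trans; [|eapply (rsum_ge_term 0 (k + 1) _ a)].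
    + cbv beta. case Rlt_dec; [lra| contradiction].
    + intros; apply Hind.
    + lia.
  - intros; apply rsum_nonneg; intros; apply Hind.
  - lia.
Qed.

Lemma major_count_sum k N : (1 <= N)%nat ->
  rsum 0 (2 * N) (fun j => major_count k N j) <= INR k * (INR k + 1) * (INR k + 1).
Proof.
  intros HN. unfold major_count. rewrite rsum_swap.
  assert (HNR: 0 < INR N) by (apply lt_0_INR; lia).
  eapply Rle_trans; [apply rsum_le with (G := fun _ => (INR k + 1) * (INR k + 1))|].
  - intros q Hq. rewrite rsum_swap.
    eapply Rle_trans; [apply rsum_le with (G := fun _ => INR k + 1)|].
    + intros a Ha.
      eapply Rle_trans; [apply rsum_le with (G := fun j => if Rlt_dec (Rabs (INR j - INR (2 * N) * INR a / INR q)) (INR k / 2) then 1 else 0)|].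
      * intros j Hj. destruct (Rlt_dec (Rabs (INR j / INR (2 * N) - INR a / INR q)) (INR k / (4 * INR N))) as [H1|H1];
        destruct (Rlt_dec (Rabs (INR j - INR (2 * N) * INR a / INR q)) (INR k / 2)) as [H2|H2]; try lra.
        exfalso; apply H2. assert (HqR: 0 < INR q) by (apply lt_0_INR; lia).
        replace (INR j - INR (2 * N) * INR a / INR q) with (INR (2 * N) * (INR j / INR (2 * N) - INR a / INR q))
          by (rewrite mult_INR; simpl; field; lra).
        rewrite Rabs_mult, Rabs_right by (apply Rle_ge, pos_INR).
        rewrite mult_INR. simpl (INR 2).
        replace (INR k / 2) with (2 * INR N * (INR k / (4 * INR N))) by (field; lra).
        rewrite mult_INR in H1. simpl (INR 2) in H1. apply Rmult_lt_compat_l; lra.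
      * pose proof (rsum_near_count (2 * N) (INR (2 * N) * INR a / INR q) (INR k / 2) ltac:(pose proof (pos_INR k); lra)). lra.
    + rewrite rsum_const, plus_INR. simpl (INR 1). lra.
  - rewrite rsum_const. lra.
Qed.

Section OffMajorArcs.

Variables (k N q a : nat) (th be : R).
Let M := Nat.sqrt (2 * N).
Let Q := (4 * M + 2 * k)%nat.
Hypothesis (Hk : (1 <= k)%nat) (HN : (10 * INR k) ^ 4 <= INR N).
Hypothesis (Hq : (1 <= q <= Q)%nat) (Hga : Nat.gcd a q = 1%nat).
Hypothesis (Hth : 0 <= th) (Eth : th = INR a / INR q + be) (Hbe : Rabs be < / (INR q * INR Q)).

Let HkR : 1 <= INR k.
Proof. replace 1 with (INR 1) by reflexivity. apply le_INR; lia. Qed.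

Let HNR : 0 < INR N.
Proof. pose proof (pow_lt (10 * INR k) 4 ltac:(lra)). lra. Qed.

Lemma weyl_sum_minor_arc_bound : (k < q)%nat -> Cmod (weyl_sum M th) <= 9 * sqrt (INR N / INR k).
Proof.
  intros Hqk.
  apply Rsqr_incr_0_var; [|pose proof (sqrt_pos (INR N / INR k)); lra].
  rewrite !Rsqr_pow2.
  eapply Rle_trans; [apply (weyl_sum_minor_arc M q a Q th be); auto; lra|].
  eapply Rle_trans; [apply (minor_arc_numeric (INR M) (INR q) (INR k) (INR N)); auto|].
  - apply pos_INR.
  - pose proof (INR_sqrt_mul_le (2 * N)) as HM. rewrite mult_INR in HM. exact HM.
  - rewrite <- S_INR. apply le_INR. lia.
  - replace (4 * INR M + 2 * INR k) with (INR Q) by (unfold Q; rewrite plus_INR, !mult_INR; simpl; ring).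
    apply le_INR; lia.
  - rewrite Rpow_mult_distr, pow2_sqrt; [lra|]. apply Rdiv_le_0_compat; lra.
Qed.

Lemma weyl_sum_major_arc_bound : (q <= k)%nat -> INR k / (4 * INR N) <= Rabs be ->
  Cmod (weyl_sum M th) <= 9 * sqrt (INR N / INR k).
Proof.
  intros Hqk Hfar.
  assert (Hbe0: be <> 0).
  { intros E. rewrite E, Rabs_R0 in Hfar. assert (0 < INR k / (4 * INR N)) by (apply Rdiv_lt_0_compat; lra). lra. }
  eapply Rle_trans; [apply (weyl_sum_major_arc M q Q (Z.of_nat a) th be); auto; try lia; try lra|].
  - rewrite <- INR_IZR_INZ. exact Eth.
  - apply major_arc_numeric; auto. split; [apply pos_INR| apply le_INR; lia].
Qed.

End OffMajorArcs.

Lemma Rmult3_le_AM_GM (F G U B : R) : 0 <= F -> 0 <= G -> 0 <= U -> U <= B ->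
  F * G * U <= B * (F ^ 2 + G ^ 2) / 2.
Proof.
  intros HF HG HU HUB.
  assert (F * G * U <= F * G * B) by (apply Rmult_le_compat_l; [nra| auto]).
  assert (F * G <= (F ^ 2 + G ^ 2) / 2) by (pose proof (pow2_ge_0 (F - G)); simpl in *; nra).
  assert (F * G * B <= (F ^ 2 + G ^ 2) / 2 * B) by (apply Rmult_le_compat_r; lra).
  lra.
Qed.

Section CircleMethodBound.

Variables (k N : nat) (delta : R) (f g : nat -> R).
Hypothesis (Hk : (1 <= k)%nat) (HN : (10 * INR k) ^ 4 <= INR N) (Hd : 0 < delta).
Hypothesis (Hf : forall n, (1 <= n <= N)%nat -> -1 <= f n <= 1).
Hypothesis (Hg : forall n, (1 <= n <= N)%nat -> -1 <= g n <= 1).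
Hypothesis (Hyp : forall (a q : nat), (1 <= a <= k)%nat -> (1 <= q <= k)%nat ->
  forall beta : R, Cmod (fhat N f (INR a / INR q + beta)) <= delta * Rabs beta * (INR N) ^ 2).

Let HkR : 1 <= INR k.
Proof. replace 1 with (INR 1) by reflexivity. apply le_INR; lia. Qed.

Let HNR : 0 < INR N.
Proof. pose proof (pow_lt (10 * INR k) 4 ltac:(lra)). lra. Qed.

Let HN1 : (1 <= N)%nat.
Proof. pose proof HNR as H0. change 0 with (INR 0) in H0. apply INR_lt in H0. lia. Qed.

(* Off the major arcs the Weyl sum is small; on them [fhat f] is small. *)
Lemma pointwise_bound (j : nat) : (j < 2 * N)%nat ->
  let th := INR j / INR (2 * N) in
  Cmod (fhat N f th) * Cmod (fhat N g th) * Cmod (weyl_sum (Nat.sqrt (2 * N)) th) <=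
  9 * sqrt (INR N / INR k) * (Cmod (fhat N f th) ^ 2 + Cmod (fhat N g th) ^ 2) / 2
  + delta * (INR k / 4) * INR N * INR N * INR (Nat.sqrt (2 * N)) * major_count k N j.
Proof.
  intros Hj th.
  set (M := Nat.sqrt (2 * N)).
  set (FF := Cmod (fhat N f th)). set (GG := Cmod (fhat N g th)). set (UU := Cmod (weyl_sum M th)).
  assert (HFF: 0 <= FF) by apply Cmod_ge_0. assert (HGG: 0 <= GG) by apply Cmod_ge_0.
  assert (HUU: 0 <= UU) by apply Cmod_ge_0.
  assert (Hcount: 0 <= major_count k N j) by apply major_count_ge_0.
  assert (Hmajor: 0 <= delta * (INR k / 4) * INR N * INR N * INR M * major_count k N j).
  { pose proof (pos_INR M). repeat apply Rmult_le_pos; lra. }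
  assert (Hsq: 0 <= 9 * sqrt (INR N / INR k)) by (pose proof (sqrt_pos (INR N / INR k)); lra).
  destruct (rational_approx_of_fraction (2 * N) j (4 * M + 2 * k) Hj ltac:(lia))
    as [q [a [Hq [Hga [Haq Hbe]]]]].
  set (be := th - INR a / INR q) in Hbe.
  assert (Eth: th = INR a / INR q + be) by (unfold be; ring).
  assert (Hth0: 0 <= th) by (apply Rdiv_le_0_compat; [apply pos_INR| apply lt_0_INR; lia]).
  destruct (le_lt_dec q k) as [Hqk|Hqk];
    [destruct (Rlt_dec (Rabs be) (INR k / (4 * INR N))) as [Hnear|Hfar]|].
  - assert (HF: FF <= delta * (INR k / 4) * INR N).
    { unfold FF. rewrite Eth. eapply Rle_trans; [apply (fhat_near_rational k); eauto; lia|].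
      replace (delta * (INR k / 4) * INR N) with (delta * (INR k / (4 * INR N)) * INR N ^ 2) by (field; lra).
      apply Rmult_le_compat_r; [apply pow_le; lra|]. apply Rmult_le_compat_l; lra. }
    assert (HG: GG <= INR N) by (apply Cmod_fhat_le; auto).
    assert (HU: UU <= INR M) by apply Cmod_weyl_sum_le.
    assert (H1: 1 <= major_count k N j) by (apply (major_count_ge_1 k N j q a); auto; lia).
    assert (FF * GG * UU <= delta * (INR k / 4) * INR N * INR N * INR M * 1).
    { rewrite Rmult_1_r. apply Rmult_le_compat; try nra. }
    assert (delta * (INR k / 4) * INR N * INR N * INR M * 1 <=
            delta * (INR k / 4) * INR N * INR N * INR M * major_count k N j).
    { apply Rmult_le_compat_l; [|lra]. pose proof (pos_INR M). repeat apply Rmult_le_pos; lra. }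
    assert (0 <= 9 * sqrt (INR N / INR k) * (FF ^ 2 + GG ^ 2) / 2) by (apply Rmult_le_pos; [apply Rmult_le_pos; nra| lra]).
    lra.
  - assert (HU: UU <= 9 * sqrt (INR N / INR k)) by (apply (weyl_sum_major_arc_bound k N q a th be); auto; lra).
    pose proof (Rmult3_le_AM_GM FF GG UU _ HFF HGG HUU HU). lra.
  - assert (HU: UU <= 9 * sqrt (INR N / INR k)) by (apply (weyl_sum_minor_arc_bound k N q a th be); auto).
    pose proof (Rmult3_le_AM_GM FF GG UU _ HFF HGG HUU HU). lra.
Qed.

Lemma circle_method_sum_bound :
  INR (2 * N) * Rabs (sumR 1 (2 * N) (fun n => conv N f g (Z.of_nat n) * ind_S n))
    <= 9 * sqrt (INR N / INR k) * (2 * INR N * INR N)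
       + delta * (INR k / 4) * INR N * INR N * INR (Nat.sqrt (2 * N)) * (INR k * (INR k + 1) * (INR k + 1)).
Proof.
  set (B := 9 * sqrt (INR N / INR k)).
  assert (HB: 0 <= B) by (unfold B; pose proof (sqrt_pos (INR N / INR k)); lra).
  eapply Rle_trans; [apply circle_method_triangle; exact HN1|].
  eapply Rle_trans; [apply rsum_le; intros j Hj; apply pointwise_bound; lia|].
  rewrite rsum_plus, rsum_scal.
  apply Rplus_le_compat.
  - rewrite (rsum_ext _ _ _ (fun j => B / 2 * (Cmod (fhat N f (INR j / INR (2 * N))) ^ 2
                                              + Cmod (fhat N g (INR j / INR (2 * N))) ^ 2)))
      by (intros; unfold B; field).
    rewrite rsum_scal, rsum_plus, !parseval_discrete, mult_INR by lia.
    pose proof (rsum_sqr_le N f Hf). pose proof (rsum_sqr_le N g Hg). change (INR 2) with 2.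
    fold B. apply Rle_trans with (B / 2 * (2 * INR N * INR N + 2 * INR N * INR N)); [|lra].
    apply Rmult_le_compat_l; nra.
  - apply Rmult_le_compat_l; [|apply major_count_sum; exact HN1].
    pose proof (pos_INR (Nat.sqrt (2 * N))). repeat apply Rmult_le_pos; lra.
Qed.

Lemma square_sum_bound :
  Rabs (sumR 1 (2 * N) (fun n => conv N f g (Z.of_nat n) * ind_S n))
    <= 9 * sqrt (INR N / INR k) * INR N + delta * INR k ^ 4 * INR N * sqrt (INR N).
Proof.
  pose proof circle_method_sum_bound as Hsum.
  rewrite mult_INR in Hsum. change (INR 2) with 2 in Hsum.
  pose proof (INR_sqrt_2N_le N) as HM. pose proof (pos_INR (Nat.sqrt (2 * N))).
  pose proof (sqrt_pos (INR N)).
  assert (Hk3: INR k * (INR k + 1) * (INR k + 1) <= 4 * INR k ^ 3) by (simpl; nra).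
  assert (Hmajor: delta * (INR k / 4) * INR N * INR N * INR (Nat.sqrt (2 * N)) * (INR k * (INR k + 1) * (INR k + 1))
                  <= 2 * INR N * (delta * INR k ^ 4 * INR N * sqrt (INR N))).
  { apply Rle_trans with (delta * (INR k / 4) * INR N * INR N * (2 * sqrt (INR N)) * (4 * INR k ^ 3)).
    - apply Rmult_le_compat; try lra.
      + repeat apply Rmult_le_pos; lra.
      + nra.
      + apply Rmult_le_compat_l; [repeat apply Rmult_le_pos|]; lra.
    - right. simpl. field. }
  apply Rmult_le_reg_l with (2 * INR N); lra.
Qed.

End CircleMethodBound.

Lemma Rpower_3_2 x : 0 < x -> Rpower x (3 / 2) = x * sqrt x.
Proof.
  intros Hx. replace (3/2) with (1 + /2) by field. rewrite Rpower_plus, Rpower_1, Rpower_sqrt; auto.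
Qed.

Theorem proposition4p4 :
  forall (lambda : R), 0 < lambda ->
  forall (k : nat), / (lambda ^ 2) = INR k ->
  exists N0 : nat,
  forall (delta : R), 0 < delta ->
  forall (N : nat), (N0 <= N)%nat ->
  forall (f g : nat -> R),
    (forall n, (1 <= n <= N)%nat -> -1 <= f n <= 1) ->
    (forall n, (1 <= n <= N)%nat -> -1 <= g n <= 1) ->
    (forall (a q : nat), (1 <= a <= k)%nat -> (1 <= q <= k)%nat ->
       forall beta : R,
         Cmod (fhat N f (INR a / INR q + beta)) <= delta * Rabs beta * (INR N) ^ 2) ->
    Rabs (sumR 1 (2 * N) (fun n => conv N f g (Z.of_nat n) * ind_S n))
      <= 10 * (delta * / lambda ^ 8 + lambda) * Rpower (INR N) (3 / 2).
Proof.
  intros lambda Hl k Hk.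
  assert (Hl2: 0 < lambda ^ 2) by (apply pow_lt; auto).
  assert (Hk1: (1 <= k)%nat).
  { destruct k; [|lia]. exfalso. pose proof (Rinv_0_lt_compat _ Hl2). change (INR 0) with 0 in Hk. lra. }
  exists (Nat.pow (10 * k) 4).
  intros delta Hd N HN f g Hf Hg Hyp.
  assert (HNk: (10 * INR k) ^ 4 <= INR N).
  { replace ((10 * INR k) ^ 4) with (INR (Nat.pow (10 * k) 4)) by (rewrite pow_INR, mult_INR; simpl; ring).
    apply le_INR; auto. }
  assert (HNR: 0 < INR N) by (pose proof (lt_0_INR k ltac:(lia)); pose proof (pow_lt (10 * INR k) 4 ltac:(lra)); lra).
  assert (Hsq: sqrt (INR N / INR k) = lambda * sqrt (INR N)).
  { rewrite <- Hk, sqrt_div_alt by (apply Rinv_0_lt_compat; exact Hl2).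
    rewrite sqrt_inv, sqrt_pow2 by lra. field. lra. }
  assert (Hl8: / lambda ^ 8 = INR k ^ 4).
  { replace (lambda ^ 8) with ((lambda ^ 2) ^ 4) by ring. rewrite <- Hk. field. lra. }
  eapply Rle_trans; [apply (square_sum_bound k N delta f g); auto|].
  rewrite Rpower_3_2, Hsq, Hl8 by exact HNR.
  assert (0 <= delta * INR k ^ 4 * INR N * sqrt (INR N))
    by (pose proof (pos_INR k); pose proof (sqrt_pos (INR N)); repeat apply Rmult_le_pos; try apply pow_le; lra).
  assert (0 <= lambda * sqrt (INR N) * INR N) by (pose proof (sqrt_pos (INR N)); repeat apply Rmult_le_pos; lra).
  nra.
Qed.
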